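(* Let $W=\partial_u+v^p\partial_v$ and, for a smooth function $\phi$ on the interior, let $\tilde K^W(\phi)=-\frac{2}{r}(v^p+1)\,\partial_v\phi\,\partial_u\phi$. Fix $u_{\text{✄}}$ in the range of $u_\gamma$. There exist constants $\delta_1=\delta_1(\epsilon)$ and $\delta_2=\delta_2(v_* )>0$, independent of $\phi$, with $\delta_1\to0$ as $\epsilon\to0$ and $\delta_2\to0$ as $v_*\to\infty$, such that for every smooth $\phi$, every $v_*\ge v_\gamma(u_{\text{✄}})$, every $\hat v>v_*$ and all $u_1<u_2$ with $u_{\text{✄}}\le u_1$ and $0<u_2-u_1\le\epsilon$, setting $\mathcal R_{V_1}=[u_1,u_2]\times[v_*,\hat v]\times\mathbb S^2$, $$\int_{\mathcal R_{V_1}}|\tilde K^W(\phi)|\,dVol\le\delta_1\sup_{u_1\le\bar u\le u_2}F^W_{u=\bar u}[v_*,\hat v]+\delta_2\sup_{v_*\le\bar v\le\hat v}F^W_{v=\bar v}[u_1,u_2].$$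
   Context: Fix $M>|e|>0$ and let $r_\pm=M\pm\sqrt{M^2-e^2}$. The black hole interior of the maximal globally hyperbolic development $(\mathcal M,g)$ of two-ended subextremal Reissner–Nordström data is covered by Eddington–Finkelstein double null coordinates $(u,v)\in\mathbb R^2$ together with spherical coordinates $(\theta,\vartheta)\in\mathbb S^2$ ($\vartheta$ the azimuthal angle), in which $g=-\Omega^2(u,v)\,du\,dv+r^2(u,v)(d\theta^2+\sin^2\theta\,d\vartheta^2)$, where $r\in(r_-,r_+)$, $\Omega^2=-(1-\frac{2M}{r}+\frac{e^2}{r^2})>0$, $\partial_u r=\partial_v r=-\Omega^2/2$, and $\frac{\partial_u\Omega}{\Omega}=\frac{\partial_v\Omega}{\Omega}=\frac{1}{2r^2}(M-\frac{e^2}{r})$. The function $r$ depends only on $r^*:=(u+v)/2$ and decreases from $r_+$ (as $r^*\to-\infty$) to $r_-$ (as $r^*\to+\infty$). For a function $\psi$, $|\nabla\!\!\!/\,\psi|^2=r^{-2}[(\partial_\theta\psi)^2+\sin^{-2}\theta(\partial_\vartheta\psi)^2]$ and $d\sigma$ is the standard measure on the unit sphere. Fix $p>1$. Fix $r_{blue}\in(r_-,r_+)$ so close to $r_-$ that $M-e^2/r<0$ for $r_-<r\le r_{blue}$ and $r^*_{blue}>0$, where $r^*_{blue}$ is the value of $r^*$ on $\{r=r_{blue}\}$; fix $\beta>0$ with $-\partial_u\Omega/\Omega=-\partial_v\Omega/\Omega\ge\beta$ on $\{r_-<r\le r_{blue}\}$. Fix $\alpha>\max\{1,(p+1)/\beta\}$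 with $\alpha(2-\log 2\alpha)>2r^*_{blue}+1$. Let $H(u,v)=u+v-\alpha\log v-2r^*_{blue}$ and $\gamma=\{H=0,\ v>2\alpha\}\times\mathbb S^2$; for $v>2\alpha$ let $u_\gamma(v)$ be the unique $u$ with $(u,v)\in\gamma$, and for $u$ in the range of $u_\gamma$ let $v_\gamma(u)$ be the corresponding $v$. For a vector field $X=X^u\partial_u+X^v\partial_v$ the null fluxes are $F^X_{u=\bar u}[v_1,v_2]=\int_{\mathbb S^2}\int_{v_1}^{v_2}\big[X^v(\partial_v\phi)^2+\frac{\Omega^2}{4}X^u|\nabla\!\!\!/\phi|^2\big](\bar u,v,\cdot)\,r^2\,dv\,d\sigma$ and $F^X_{v=\bar v}[u_1,u_2]=\int_{\mathbb S^2}\int_{u_1}^{u_2}\big[X^u(\partial_u\phi)^2+\frac{\Omega^2}{4}X^v|\nabla\!\!\!/\phi|^2\big](u,\bar v,\cdot)\,r^2\,du\,d\sigma$. The spacetime volume form is $dVol=\frac{r^2\Omega^2}{2}\,du\,dv\,d\sigma$. *)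

From Stdlib Require Import Reals.
Open Scope R_scope.

Definition RInt (f : R -> R) (a b I : R) : Prop :=
  exists pr : Riemann_integrable f a b, RiemannInt pr = I.

(* I = \int_{S^2} h d\sigma,  d\sigma = sin th d th d ph, th in [0,pi], ph in [0,2 pi] *)
Definition SphInt (h : R -> R -> R) (I : R) : Prop :=
  exists G : R -> R,
    (forall th, 0 <= th <= PI -> RInt (fun ph => h th ph * sin th) 0 (2 * PI) (G th))
    /\ RInt G 0 PI I.

Definition FluxInt (h : R -> R -> R -> R) (a b I : R) : Prop :=
  exists J : R -> R -> R,
    (forall th ph, 0 <= th <= PI -> 0 <= ph <= 2 * PI ->
        RInt (fun s => h s th ph) a b (J th ph))
    /\ SphInt J I.

Definition RectInt (h : R -> R -> R -> R -> R) (u1 u2 v1 v2 I : R) : Prop :=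
  exists G : R -> R,
    (forall u, u1 <= u <= u2 ->
       exists K : R -> R,
         (forall v, v1 <= v <= v2 -> SphInt (h u v) (K v))
         /\ RInt K v1 v2 (G u))
    /\ RInt G u1 u2 I.

Definition lift5 (Phi : R -> R -> R -> R -> R -> R) (x : nat -> R) : R :=
  Phi (x 0%nat) (x 1%nat) (x 2%nat) (x 3%nat) (x 4%nat).

Definition upd (x : nat -> R) (i : nat) (t : R) : nat -> R :=
  fun j => if Nat.eqb j i then t else x j.

Definition cont5 (f : (nat -> R) -> R) : Prop :=
  forall x eps, 0 < eps -> exists d, 0 < d /\
    forall y, (forall j, (j < 5)%nat -> Rabs (y j - x j) < d) ->
              (forall j, (5 <= j)%nat -> y j = x j) ->
              Rabs (f y - f x) < eps.

Fixpoint Ck5 (k : nat) (f : (nat -> R) -> R) : Prop :=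
  cont5 f /\
  match k with
  | O => True
  | S k' => forall i, (i < 5)%nat -> exists g : (nat -> R) -> R,
              (forall x, derivable_pt_lim (fun t => f (upd x i t)) (x i) (g x))
              /\ Ck5 k' g
  end.

Definition smooth5 (Phi : R -> R -> R -> R -> R -> R) : Prop :=
  forall k, Ck5 k (lift5 Phi).

(* A smooth function on the interior R^2_{(u,v)} x S^2, written in the
   coordinates (u,v,theta,vartheta): restriction of a smooth Phi on R^2 x R^3. *)
Definition psiOf (Phi : R -> R -> R -> R -> R -> R) (u v th ph : R) : R :=
  Phi u v (sin th * cos ph) (sin th * sin ph) (cos th).

Definition partials (Phi : R -> R -> R -> R -> R -> R)
  (du dv dth dph : R -> R -> R -> R -> R) : Prop :=
  forall u v th ph,
    derivable_pt_lim (fun t => psiOf Phi t v th ph) u (du u v th ph) /\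
    derivable_pt_lim (fun t => psiOf Phi u t th ph) v (dv u v th ph) /\
    derivable_pt_lim (fun t => psiOf Phi u v t ph) th (dth u v th ph) /\
    derivable_pt_lim (fun t => psiOf Phi u v th t) ph (dph u v th ph).

Definition rplus (M e : R) : R := M + sqrt (M ^ 2 - e ^ 2).
Definition rminus (M e : R) : R := M - sqrt (M ^ 2 - e ^ 2).

(* Rf gives r as a function of r^* = (u+v)/2 : values in (r_-,r_+),
   dr/dr^* = -Omega^2 = 1 - 2M/r + e^2/r^2 (so d_u r = d_v r = -Omega^2/2),
   r -> r_+ as r^* -> -infty, r -> r_- as r^* -> +infty. *)
Definition RN_rfun (M e : R) (Rf : R -> R) : Prop :=
  (forall s, rminus M e < Rf s < rplus M e) /\
  (forall s, derivable_pt_lim Rf s (1 - 2 * M / Rf s + e ^ 2 / (Rf s) ^ 2)) /\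
  (forall eps, 0 < eps -> exists S, forall s, s <= S -> Rabs (Rf s - rplus M e) < eps) /\
  (forall eps, 0 < eps -> exists S, forall s, S <= s -> Rabs (Rf s - rminus M e) < eps).

Definition rr (Rf : R -> R) (u v : R) : R := Rf ((u + v) / 2).

Definition Om2 (M e : R) (Rf : R -> R) (u v : R) : R :=
  - (1 - 2 * M / rr Rf u v + e ^ 2 / (rr Rf u v) ^ 2).

Definition angGrad2 (Rf : R -> R) (dth dph : R -> R -> R -> R -> R) (u v th ph : R) : R :=
  / (rr Rf u v) ^ 2 * ((dth u v th ph) ^ 2 + / (sin th) ^ 2 * (dph u v th ph) ^ 2).

(* u_gamma(v) : the u with H(u,v) = u + v - alpha log v - 2 r^*_blue = 0 *)
Definition u_gamma (alpha rsb v : R) : R := 2 * rsb + alpha * ln v - v.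

Definition KtildeW (p : R) (Rf : R -> R) (du dv : R -> R -> R -> R -> R) (u v th ph : R) : R :=
  - (2 / rr Rf u v) * (Rpower v p + 1) * dv u v th ph * du u v th ph.

(* integrand of F^W_{u = ub}: [W^v (d_v phi)^2 + Omega^2/4 W^u |nabla phi|^2] r^2 *)
Definition fluxU_integrand (M e p : R) (Rf : R -> R) (du dv dth dph : R -> R -> R -> R -> R)
  (ub : R) (v th ph : R) : R :=
  (Rpower v p * (dv ub v th ph) ^ 2 + Om2 M e Rf ub v / 4 * 1 * angGrad2 Rf dth dph ub v th ph)
  * (rr Rf ub v) ^ 2.

(* integrand of F^W_{v = vb}: [W^u (d_u phi)^2 + Omega^2/4 W^v |nabla phi|^2] r^2 *)
Definition fluxV_integrand (M e p : R) (Rf : R -> R) (du dv dth dph : R -> R -> R -> R -> R)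
  (vb : R) (u th ph : R) : R :=
  (1 * (du u vb th ph) ^ 2 + Om2 M e Rf u vb / 4 * Rpower vb p * angGrad2 Rf dth dph u vb th ph)
  * (rr Rf u vb) ^ 2.

(* |tilde K^W| times the density of dVol = r^2 Omega^2 / 2 du dv dsigma *)
Definition bulk_integrand (M e p : R) (Rf : R -> R) (du dv : R -> R -> R -> R -> R)
  (u v th ph : R) : R :=
  Rabs (KtildeW p Rf du dv u v th ph) * ((rr Rf u v) ^ 2 * Om2 M e Rf u v / 2).

From Pilot Require Import Defs.
From Stdlib Require Import Reals Lra Psatz ClassicalEpsilon FunctionalExtensionality.
From Coquelicot Require Import Coquelicot.
Open Scope R_scope.

(* Pointwise, |K^W| dVol = r Omega^2 (v^p + 1) |d_u phi d_v phi|, and by AM-GM this is at most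
   (Omega^2 / r) v^p (d_v phi)^2 r^2 + (Omega^2 v^p / r) (d_u phi)^2 r^2.  In the blue-shift
   region Omega^2 <~ e^{-2 beta (u + v)}, so the first weight is bounded by a constant c1 and the
   second by C2 e^{-beta v}, since v^p <~ e^{beta v}.  Integrating, the first term is at most
   c1 (u2 - u1) times the largest u-flux, and the second, by Fubini, is at most
   \int_{v_*} C2 e^{-beta v} dv times the largest v-flux: delta1 = c1 eps and
   delta2 = (C2 / beta) e^{-beta v_*}.  Most of the work is in making the iterated Riemann
   integrals exist, which needs joint continuity of the first derivatives of phi in the
   coordinates (u, v, theta, vartheta), including the regularity of d_vartheta phi / sin theta
   at the poles. *)

(** * Joint continuity in four variables *)

(* The four arguments stand for (u, v, theta, vartheta). *)
Definition continuous4 (f : R -> R -> R -> R -> R) : Prop :=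
  forall a b c d eps, 0 < eps -> exists del, 0 < del /\
    forall a' b' c' d', Rabs (a' - a) < del -> Rabs (b' - b) < del ->
      Rabs (c' - c) < del -> Rabs (d' - d) < del ->
      Rabs (f a' b' c' d' - f a b c d) < eps.

Lemma continuous4_const k : continuous4 (fun _ _ _ _ => k).
Proof.
  intros a b c d eps he; exists 1; split; [lra|]; intros.
  unfold Rminus; rewrite Rplus_opp_r, Rabs_R0; lra.
Qed.

Lemma continuous4_var0 : continuous4 (fun a _ _ _ => a).
Proof. intros a b c d eps he; exists eps; split; [lra|]; intros; lra. Qed.
Lemma continuous4_var1 : continuous4 (fun _ b _ _ => b).
Proof. intros a b c d eps he; exists eps; split; [lra|]; intros; lra. Qed.
Lemma continuous4_var2 : continuous4 (fun _ _ c _ => c).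
Proof. intros a b c d eps he; exists eps; split; [lra|]; intros; lra. Qed.
Lemma continuous4_var3 : continuous4 (fun _ _ _ d => d).
Proof. intros a b c d eps he; exists eps; split; [lra|]; intros; lra. Qed.

Lemma continuous4_comp F e0 e1 e2 e3 :
  continuous4 F -> continuous4 e0 -> continuous4 e1 -> continuous4 e2 -> continuous4 e3 ->
  continuous4 (fun a b c d => F (e0 a b c d) (e1 a b c d) (e2 a b c d) (e3 a b c d)).
Proof.
  intros HF H0 H1 H2 H3 a b c d eps he.
  destruct (HF (e0 a b c d) (e1 a b c d) (e2 a b c d) (e3 a b c d) eps he) as [del [hd HD]].
  destruct (H0 a b c d del hd) as [d0 [hd0 HD0]].
  destruct (H1 a b c d del hd) as [d1 [hd1 HD1]].
  destruct (H2 a b c d del hd) as [d2 [hd2 HD2]].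
  destruct (H3 a b c d del hd) as [d3 [hd3 HD3]].
  exists (Rmin (Rmin d0 d1) (Rmin d2 d3)); split; [repeat apply Rmin_pos; auto|].
  intros a' b' c' d' ha hb hc hdd.
  pose proof (Rmin_l (Rmin d0 d1) (Rmin d2 d3)); pose proof (Rmin_r (Rmin d0 d1) (Rmin d2 d3)).
  pose proof (Rmin_l d0 d1); pose proof (Rmin_r d0 d1).
  pose proof (Rmin_l d2 d3); pose proof (Rmin_r d2 d3).
  apply HD; [apply HD0|apply HD1|apply HD2|apply HD3]; lra.
Qed.

Lemma continuous4_add : continuous4 (fun x y _ _ => x + y).
Proof.
  intros a b c d eps he; exists (eps / 2); split; [lra|]; intros a' b' c' d' h1 h2 _ _.
  replace (a' + b' - (a + b)) with ((a' - a) + (b' - b)) by ring.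
  eapply Rle_lt_trans; [apply Rabs_triang|]; lra.
Qed.

Lemma continuous4_mul : continuous4 (fun x y _ _ => x * y).
Proof.
  intros a b c d eps he.
  set (K := Rabs a + Rabs b + 1).
  assert (hK : 0 < K) by (unfold K; pose proof (Rabs_pos a); pose proof (Rabs_pos b); lra).
  exists (Rmin 1 (eps / (4 * K))); split.
  { apply Rmin_pos; [lra|]. apply Rdiv_lt_0_compat; lra. }
  intros a' b' c' d' h1 h2 _ _.
  pose proof (Rmin_l 1 (eps / (4 * K))); pose proof (Rmin_r 1 (eps / (4 * K))).
  replace (a' * b' - a * b) with ((a' - a) * b' + a * (b' - b)) by ring.
  eapply Rle_lt_trans; [apply Rabs_triang|]. rewrite !Rabs_mult.
  assert (hb' : Rabs b' <= Rabs b + 1).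
  { replace b' with (b + (b' - b)) by ring. eapply Rle_trans; [apply Rabs_triang|]; lra. }
  assert (e1 : Rabs (a' - a) * Rabs b' <= eps / (4 * K) * K).
  { apply Rmult_le_compat; try apply Rabs_pos; unfold K in *; try lra.
    pose proof (Rabs_pos a); lra. }
  assert (e2 : Rabs a * Rabs (b' - b) <= K * (eps / (4 * K))).
  { apply Rmult_le_compat; try apply Rabs_pos; unfold K in *; try lra.
    pose proof (Rabs_pos b); lra. }
  assert (e3 : eps / (4 * K) * K = eps / 4) by (field; lra).
  assert (e4 : K * (eps / (4 * K)) = eps / 4) by (field; lra).
  lra.
Qed.

Lemma continuous4_plus F G :
  continuous4 F -> continuous4 G -> continuous4 (fun a b c d => F a b c d + G a b c d).
Proof.
  intros; apply (continuous4_comp (fun x y _ _ => x + y) _ _ (fun _ _ _ _ => 0) (fun _ _ _ _ => 0));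
    auto using continuous4_add, continuous4_const.
Qed.

Lemma continuous4_mult F G :
  continuous4 F -> continuous4 G -> continuous4 (fun a b c d => F a b c d * G a b c d).
Proof.
  intros; apply (continuous4_comp (fun x y _ _ => x * y) _ _ (fun _ _ _ _ => 0) (fun _ _ _ _ => 0));
    auto using continuous4_mul, continuous4_const.
Qed.

Lemma continuity_pt_ball f x : continuity_pt f x <->
  forall eps, 0 < eps -> exists d, 0 < d /\
    forall y, Rabs (y - x) < d -> Rabs (f y - f x) < eps.
Proof.
  split.
  - intros H eps he. destruct (H eps he) as [d [hd Hd]]. exists d; split; auto.
    intros y hy. destruct (Req_dec y x) as [->|ne].
    + unfold Rminus; rewrite Rplus_opp_r, Rabs_R0; auto.
    + apply (Hd y). split; [split; [exact I| auto]| exact hy].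
  - intros H eps he. destruct (H eps he) as [d [hd Hd]]. exists d; split; auto.
    intros y [_ hy]. apply Hd. exact hy.
Qed.

Lemma continuous4_comp1 f F :
  (forall x, continuity_pt f x) -> continuous4 F -> continuous4 (fun a b c d => f (F a b c d)).
Proof.
  intros Hf HF.
  apply (continuous4_comp (fun x _ _ _ => f x) _ (fun _ _ _ _ => 0) (fun _ _ _ _ => 0)
           (fun _ _ _ _ => 0)); auto using continuous4_const.
  intros a b c d eps he. destruct (proj1 (continuity_pt_ball f a) (Hf a) eps he) as [del [hd H]].
  exists del; split; auto.
Qed.

Lemma continuous4_opp F : continuous4 F -> continuous4 (fun a b c d => - F a b c d).
Proof.
  intros H. replace (fun a b c d => - F a b c d) with (fun a b c d => -1 * F a b c d)
    by (repeat (apply functional_extensionality; intro); ring).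
  apply continuous4_mult; auto using continuous4_const.
Qed.

Lemma continuous4_minus F G :
  continuous4 F -> continuous4 G -> continuous4 (fun a b c d => F a b c d - G a b c d).
Proof. intros; apply continuous4_plus; auto; apply continuous4_opp; auto. Qed.

Lemma continuous4_pow F n : continuous4 F -> continuous4 (fun a b c d => F a b c d ^ n).
Proof.
  intros H; induction n; simpl; [apply continuous4_const| apply continuous4_mult; auto].
Qed.

Ltac continuity4 :=
  repeat first
    [ assumption | apply continuous4_const
    | apply continuous4_var0 | apply continuous4_var1
    | apply continuous4_var2 | apply continuous4_var3
    | apply continuous4_plus | apply continuous4_minus | apply continuous4_mult
    | apply continuous4_opp | apply continuous4_pow
    | apply (continuous4_comp1 sin); [exact continuity_sin|]
    | apply (continuous4_comp1 cos); [exact continuity_cos|]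
    | apply (continuous4_comp1 exp); [intro; apply derivable_continuous_pt, derivable_exp|] ].

(** * Parametric integrals and Fubini *)

Lemma continuous4_continuous0 F b c d x : continuous4 F -> continuous (fun t => F t b c d) x.
Proof.
  intros H. apply continuity_pt_filterlim, continuity_pt_ball. intros eps he.
  destruct (H x b c d eps he) as [del [hd D]].
  exists del; split; auto. intros y hy.
  apply D; auto; unfold Rminus; rewrite Rplus_opp_r, Rabs_R0; auto.
Qed.

Lemma continuous4_ex_RInt0 F b c d lo hi : continuous4 F -> ex_RInt (fun t => F t b c d) lo hi.
Proof.
  intros H. apply (ex_RInt_continuous (V:=R_CompleteNormedModule)).
  intros; apply continuous4_continuous0; auto.
Qed.

Lemma continuous4_ex_RInt1 F a c d lo hi : continuous4 F -> ex_RInt (fun t => F a t c d) lo hi.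
Proof.
  intros H. apply (continuous4_ex_RInt0 (fun t a c d => F a t c d)).
  apply (continuous4_comp F); continuity4.
Qed.

Lemma continuous4_ex_RInt3 F a b c lo hi : continuous4 F -> ex_RInt (fun t => F a b c t) lo hi.
Proof.
  intros H. apply (continuous4_ex_RInt0 (fun t a b c => F a b c t)).
  apply (continuous4_comp F); continuity4.
Qed.

Lemma continuous4_uniform0 F lo hi b c d eta : continuous4 F -> 0 < eta -> exists del, 0 < del /\
  forall t b' c' d', lo <= t <= hi -> Rabs (b' - b) < del -> Rabs (c' - c) < del ->
     Rabs (d' - d) < del -> Rabs (F t b' c' d' - F t b c d) < eta.
Proof.
  intros HF he.
  assert (Hex : forall t, exists del : posreal, forall a' b' c' d', Rabs (a' - t) < del ->
      Rabs (b' - b) < del -> Rabs (c' - c) < del -> Rabs (d' - d) < del ->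
      Rabs (F a' b' c' d' - F t b c d) < eta / 2).
  { intros t. destruct (HF t b c d (eta / 2)) as [del [hd D]]; [lra|].
    exists (mkposreal del hd); simpl; auto. }
  set (delta := fun t => proj1_sig (constructive_indefinite_description _ (Hex t))).
  assert (Hdel : forall t a' b' c' d', Rabs (a' - t) < delta t -> Rabs (b' - b) < delta t ->
      Rabs (c' - c) < delta t -> Rabs (d' - d) < delta t ->
      Rabs (F a' b' c' d' - F t b c d) < eta / 2).
  { intros t. unfold delta.
    destruct (constructive_indefinite_description _ (Hex t)) as [x Hx]; simpl; auto. }
  destruct (compactness_value_1d lo hi delta) as [d0 Hd0].
  exists d0; split; [apply cond_pos|].
  intros t b' c' d' ht hb hc hd.
  apply Rnot_le_lt; intro Hc. apply (Hd0 t ht). intros [t0 [ht0 [h1 h2]]].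
  assert (X1 := Hdel t0 t b' c' d' h1 ltac:(lra) ltac:(lra) ltac:(lra)).
  assert (X2 := Hdel t0 t b c d h1).
  rewrite !Rminus_diag, Rabs_R0 in X2. specialize (X2 (cond_pos _) (cond_pos _) (cond_pos _)).
  assert (Rabs (F t b' c' d' - F t b c d)
          <= Rabs (F t b' c' d' - F t0 b c d) + Rabs (F t b c d - F t0 b c d)).
  { replace (F t b' c' d' - F t b c d)
      with ((F t b' c' d' - F t0 b c d) - (F t b c d - F t0 b c d)) by ring.
    eapply Rle_trans; [apply Rabs_triang|]. rewrite Rabs_Ropp. lra. }
  lra.
Qed.

Lemma RInt_minus_R f g lo hi : ex_RInt f lo hi -> ex_RInt g lo hi ->
  RInt (fun t => f t - g t) lo hi = RInt f lo hi - RInt g lo hi.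
Proof. intros; apply (RInt_minus (V:=R_CompleteNormedModule)); auto. Qed.

Lemma RInt_plus_R f g lo hi : ex_RInt f lo hi -> ex_RInt g lo hi ->
  RInt (fun t => f t + g t) lo hi = RInt f lo hi + RInt g lo hi.
Proof. intros; apply (RInt_plus (V:=R_CompleteNormedModule)); auto. Qed.

Lemma RInt_scal_R f k lo hi : ex_RInt f lo hi ->
  RInt (fun t => k * f t) lo hi = k * RInt f lo hi.
Proof. intros; apply (RInt_scal (V:=R_CompleteNormedModule)); auto. Qed.

Lemma ex_RInt_scal_R f k lo hi : ex_RInt f lo hi -> ex_RInt (fun t => k * f t) lo hi.
Proof. apply (ex_RInt_scal (V:=R_CompleteNormedModule)). Qed.

Lemma RInt_le_R f g a b : a <= b -> ex_RInt f a b -> ex_RInt g a b ->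
  (forall x, a <= x <= b -> f x <= g x) -> RInt f a b <= RInt g a b.
Proof. intros. apply RInt_le; auto. intros; apply H2; lra. Qed.

Lemma RInt_ge0_R f a b : a <= b -> ex_RInt f a b ->
  (forall x, a <= x <= b -> 0 <= f x) -> 0 <= RInt f a b.
Proof. intros. apply RInt_ge_0; auto. intros; apply H1; lra. Qed.

Lemma continuous4_RInt0_ordered F lo hi : lo <= hi -> continuous4 F ->
  continuous4 (fun a b c d => RInt (fun t => F t b c d) lo hi).
Proof.
  intros hlh HF a b c d eps he.
  destruct (continuous4_uniform0 F lo hi b c d (eps / (hi - lo + 1)) HF) as [del [hd D]].
  { apply Rdiv_lt_0_compat; lra. }
  exists del; split; auto. intros a' b' c' d' _ hb hc hdd.
  rewrite <- RInt_minus_R by (apply continuous4_ex_RInt0; auto).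
  eapply Rle_lt_trans.
  { apply (abs_RInt_le_const _ lo hi (eps / (hi - lo + 1))); auto.
    - apply (ex_RInt_minus (V:=R_CompleteNormedModule)); apply continuous4_ex_RInt0; auto.
    - intros t ht. apply Rlt_le. apply D; auto. }
  apply Rlt_le_trans with ((hi - lo + 1) * (eps / (hi - lo + 1))).
  { apply Rmult_lt_compat_r; [apply Rdiv_lt_0_compat|]; lra. }
  right; field; lra.
Qed.

Lemma continuous4_RInt0 F lo hi : continuous4 F ->
  continuous4 (fun a b c d => RInt (fun t => F t b c d) lo hi).
Proof.
  intros HF. destruct (Rle_dec lo hi); [apply continuous4_RInt0_ordered; auto|].
  replace (fun a b c d : R => RInt (fun t => F t b c d) lo hi)
    with (fun a b c d : R => - RInt (fun t => F t b c d) hi lo).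
  - apply continuous4_opp, continuous4_RInt0_ordered; auto; lra.
  - repeat (apply functional_extensionality; intro).
    rewrite <- opp_RInt_swap by (apply continuous4_ex_RInt0; auto).
    unfold opp; simpl. ring.
Qed.

Lemma continuous4_RInt_param (G : R -> R -> R) lo hi : continuous4 (fun a b _ _ => G a b) ->
  continuous4 (fun b _ _ _ => RInt (fun t => G t b) lo hi).
Proof.
  intros H.
  apply (continuous4_comp (fun _ b _ _ => RInt (fun t => G t b) lo hi) (fun _ _ _ _ => 0)
           (fun b _ _ _ => b) (fun _ _ _ _ => 0) (fun _ _ _ _ => 0));
    [apply (continuous4_RInt0 (fun a b _ _ => G a b)); auto | continuity4 ..].
Qed.

Lemma is_derive_0_const (h : R -> R) : (forall z, is_derive h z 0) -> forall x y, h x = h y.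
Proof.
  intros H x y.
  assert (D : forall z, derivable_pt_lim h z 0) by (intros z; apply is_derive_Reals, H).
  destruct (Rtotal_order x y) as [l|[e|g]].
  - destruct (MVT_cor2 h (fun _ => 0) x y l (fun c _ => D c)) as [c [hc _]]. lra.
  - subst; auto.
  - destruct (MVT_cor2 h (fun _ => 0) y x g (fun c _ => D c)) as [c [hc _]]. lra.
Qed.

Lemma is_derive_RInt_upper (G : R -> R) c z : continuous4 (fun y _ _ _ => G y) ->
  is_derive (fun u => RInt G c u) z (G z).
Proof.
  intros H. apply (is_derive_RInt (V:=R_NormedModule) G (fun u => RInt G c u) c z).
  - apply filter_forall. intros z0. apply (RInt_correct (V:=R_CompleteNormedModule)).
    apply (continuous4_ex_RInt0 (fun y _ _ _ => G y) 0 0 0 c z0 H).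
  - apply (continuous4_continuous0 (fun y _ _ _ => G y) 0 0 0 z H).
Qed.

(* Both iterated integrals, with variable upper bound z, have derivative \int_a^b f(x, z) dx
   and vanish at z = c. *)
Lemma RInt_swap (f : R -> R -> R) a b c d : continuous4 (fun x y _ _ => f x y) ->
  RInt (fun x => RInt (fun y => f x y) c d) a b = RInt (fun y => RInt (fun x => f x y) a b) c d.
Proof.
  intros Hf.
  set (Phi := fun z => RInt (fun x => RInt (fun y => f x y) c z) a b).
  set (Psi := fun z => RInt (fun y => RInt (fun x => f x y) a b) c z).
  assert (Hf' : continuous4 (fun y x _ _ => f x y))
    by (apply (continuous4_comp (fun x y _ _ => f x y) (fun _ x _ _ => x) (fun y _ _ _ => y)
                 (fun _ _ _ _ => 0) (fun _ _ _ _ => 0)); continuity4).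
  assert (Dinner : forall x z, is_derive (fun u => RInt (fun y => f x y) c u) z (f x z)).
  { intros x z. apply (is_derive_RInt_upper (fun y => f x y)).
    apply (continuous4_comp (fun y x _ _ => f x y) (fun y _ _ _ => y) (fun _ _ _ _ => x)
             (fun _ _ _ _ => 0) (fun _ _ _ _ => 0)); continuity4. }
  assert (Dpsi : forall z, is_derive Psi z (RInt (fun x => f x z) a b))
    by (intros z; apply (is_derive_RInt_upper (fun y => RInt (fun x => f x y) a b)),
          (continuous4_RInt_param f); exact Hf).
  assert (Dphi : forall z, is_derive Phi z (RInt (fun x => f x z) a b)).
  { intros z. unfold Phi.
    rewrite (RInt_ext (fun x => f x z) (fun t => Derive (fun u => RInt (fun y => f t y) c u) z))
      by (intros x _; symmetry; apply is_derive_unique, Dinner).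
    apply (is_derive_RInt_param (fun u t => RInt (fun y => f t y) c u) a b z).
    - apply filter_forall. intros z0 t _. exists (f t z0). apply Dinner.
    - intros t _.
      replace (fun u v => Derive (fun z1 => RInt (fun y => f v y) c z1) u) with (fun u v => f v u)
        by (do 2 (apply functional_extensionality; intro);
            symmetry; apply is_derive_unique, Dinner).
      intros eps. destruct (Hf' z t 0 0 eps (cond_pos eps)) as [del [hd D]].
      exists (mkposreal del hd); simpl. intros u v hu hv.
      apply (D u v 0 0); auto; unfold Rminus; rewrite Rplus_opp_r, Rabs_R0; auto.
    - apply filter_forall. intros y.
      apply (continuous4_ex_RInt0 (fun x _ _ _ => RInt (fun y' => f x y') c y) 0 0 0 a b).
      apply (continuous4_RInt_param (fun y x => f x y)); exact Hf'. }
  assert (Hc : Phi c = Psi c).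
  { unfold Phi, Psi. rewrite (RInt_point (V:=R_CompleteNormedModule)).
    rewrite (RInt_ext _ (fun _ => 0)) by (intros; apply (RInt_point (V:=R_CompleteNormedModule))).
    rewrite (RInt_const (V:=R_CompleteNormedModule)).
    unfold scal, zero; simpl. unfold mult; simpl. ring. }
  assert (Hd : forall z, is_derive (fun z => Phi z - Psi z) z 0).
  { intros z. replace 0 with (RInt (fun x => f x z) a b - RInt (fun x => f x z) a b) by ring.
    apply (is_derive_minus (K:=R_AbsRing) (V:=R_NormedModule)); auto. }
  pose proof (is_derive_0_const _ Hd d c).
  change (Phi d = Psi d). lra.
Qed.

(** * The chain rule in R^5 *)

Definition splice (x y : nat -> R) (k : nat) : nat -> R :=
  fun j => if Nat.ltb j k then y j else x j.

Lemma splice_step_mvt (f gk : (nat -> R) -> R) (x y : nat -> R) (k : nat) :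
  (forall z, derivable_pt_lim (fun t => f (upd z k t)) (z k) (gk z)) ->
  exists xi : nat -> R, (forall j, Rabs (xi j - x j) <= Rabs (y j - x j)) /\
    f (splice x y (S k)) - f (splice x y k) = gk xi * (y k - x k).
Proof.
  intros Hd.
  set (w := splice x y k).
  assert (E1 : splice x y (S k) = upd w k (y k)).
  { apply functional_extensionality; intro j. unfold w, splice, upd.
    destruct (Nat.eqb_spec j k); destruct (Nat.ltb_spec j (S k)); destruct (Nat.ltb_spec j k);
      subst; auto; lia. }
  assert (E0 : w = upd w k (x k)).
  { apply functional_extensionality; intro j. unfold w, splice, upd.
    destruct (Nat.eqb_spec j k); destruct (Nat.ltb_spec j k); subst; auto; lia. }
  assert (Hw : forall j c, (c - x k) * (c - y k) <= 0 ->
                 Rabs (upd w k c j - x j) <= Rabs (y j - x j)).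
  { intros j c hc. unfold w, upd, splice.
    destruct (Nat.eqb_spec j k) as [->|ne].
    - unfold Rabs; repeat destruct Rcase_abs; nra.
    - destruct (Nat.ltb j k); [right; auto|].
      unfold Rminus; rewrite Rplus_opp_r, Rabs_R0; apply Rabs_pos. }
  assert (Hder : forall c, derivable_pt_lim (fun t => f (upd w k t)) c (gk (upd w k c))).
  { intros c. assert (H := Hd (upd w k c)).
    replace (fun t => f (upd (upd w k c) k t)) with (fun t => f (upd w k t)) in H.
    2: { apply functional_extensionality; intro t. f_equal.
         apply functional_extensionality; intro j. unfold upd. destruct (Nat.eqb j k); auto. }
    unfold upd at 2 in H. rewrite Nat.eqb_refl in H. exact H. }
  rewrite E1. replace (f w) with (f (upd w k (x k))) by (rewrite <- E0; auto).
  destruct (Rtotal_order (x k) (y k)) as [l|[e|g]].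
  - destruct (MVT_cor2 (fun t => f (upd w k t)) (fun c => gk (upd w k c)) (x k) (y k) l
       (fun c _ => Hder c)) as [c [hc hc2]].
    exists (upd w k c). split; auto. intros j; apply Hw. nra.
  - exists w. split.
    + intros j. unfold w, splice. destruct (Nat.ltb j k); [right; auto|].
      unfold Rminus; rewrite Rplus_opp_r, Rabs_R0; apply Rabs_pos.
    + rewrite e. ring.
  - destruct (MVT_cor2 (fun t => f (upd w k t)) (fun c => gk (upd w k c)) (y k) (x k) g
       (fun c _ => Hder c)) as [c [hc hc2]].
    exists (upd w k c). split; [intros j; apply Hw; nra|]. lra.
Qed.

(* Points of R^5 are functions [nat -> R] that are frozen beyond index 4. *)
Definition near5 (x y : nat -> R) (d : R) : Prop :=
  (forall j, (j < 5)%nat -> Rabs (y j - x j) < d) /\ (forall j, (5 <= j)%nat -> y j = x j).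

Lemma splice_step_linear (f gk : (nat -> R) -> R) (x y : nat -> R) (k : nat) d eps :
  (forall z, derivable_pt_lim (fun t => f (upd z k t)) (z k) (gk z)) ->
  (forall z, near5 x z d -> Rabs (gk z - gk x) < eps) -> near5 x y d ->
  Rabs (f (splice x y (S k)) - f (splice x y k) - gk x * (y k - x k)) <= eps * Rabs (y k - x k).
Proof.
  intros Hd Hc [Hy Hy5].
  destruct (splice_step_mvt f gk x y k Hd) as [xi [Hxi E]]. rewrite E.
  assert (Hg : Rabs (gk xi - gk x) < eps).
  { apply Hc. split.
    - intros j hj. eapply Rle_lt_trans; [apply Hxi| auto].
    - intros j hj. specialize (Hxi j). rewrite Hy5, Rminus_diag, Rabs_R0 in Hxi by auto.
      pose proof (Rabs_pos (xi j - x j)).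
      destruct (Req_dec (xi j - x j) 0) as [Z|Z]; [lra|]. apply Rabs_no_R0 in Z. lra. }
  replace (gk xi * (y k - x k) - gk x * (y k - x k)) with ((gk xi - gk x) * (y k - x k)) by ring.
  rewrite Rabs_mult. apply Rmult_le_compat_r; [apply Rabs_pos| lra].
Qed.

Definition sum5 (h : nat -> R) : R := h 0%nat + h 1%nat + h 2%nat + h 3%nat + h 4%nat.

Lemma sum5_le (a b : nat -> R) : (forall i, (i < 5)%nat -> a i <= b i) -> sum5 a <= sum5 b.
Proof.
  intros H; unfold sum5.
  pose proof (H 0%nat ltac:(lia)); pose proof (H 1%nat ltac:(lia)); pose proof (H 2%nat ltac:(lia));
    pose proof (H 3%nat ltac:(lia)); pose proof (H 4%nat ltac:(lia)); lra.
Qed.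

Lemma sum5_abs (a : nat -> R) : Rabs (sum5 a) <= sum5 (fun i => Rabs (a i)).
Proof.
  unfold sum5. set (s := a 0%nat + a 1%nat + a 2%nat).
  pose proof (Rabs_triang (s + a 3%nat) (a 4%nat)); pose proof (Rabs_triang s (a 3%nat)).
  pose proof (Rabs_triang (a 0%nat + a 1%nat) (a 2%nat)); pose proof (Rabs_triang (a 0%nat) (a 1%nat)).
  unfold s in *; lra.
Qed.

Lemma sum5_nonneg (a : nat -> R) : (forall i, (i < 5)%nat -> 0 <= a i) -> 0 <= sum5 a.
Proof. intros H. apply Rle_trans with (sum5 (fun _ => 0)); [unfold sum5; lra| apply sum5_le; auto]. Qed.

Lemma Rmin5_pos d0 d1 d2 d3 d4 : 0 < d0 -> 0 < d1 -> 0 < d2 -> 0 < d3 -> 0 < d4 ->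
  let d := Rmin (Rmin (Rmin d0 d1) (Rmin d2 d3)) d4 in
  0 < d /\ d <= d0 /\ d <= d1 /\ d <= d2 /\ d <= d3 /\ d <= d4.
Proof.
  intros; subst d. split; [repeat apply Rmin_pos; auto|].
  pose proof (Rmin_l (Rmin (Rmin d0 d1) (Rmin d2 d3)) d4).
  pose proof (Rmin_r (Rmin (Rmin d0 d1) (Rmin d2 d3)) d4).
  pose proof (Rmin_l (Rmin d0 d1) (Rmin d2 d3)); pose proof (Rmin_r (Rmin d0 d1) (Rmin d2 d3)).
  pose proof (Rmin_l d0 d1); pose proof (Rmin_r d0 d1); pose proof (Rmin_l d2 d3);
    pose proof (Rmin_r d2 d3).
  repeat split; lra.
Qed.

Lemma difference_quotients5 (c : R -> nat -> R) (c' : nat -> R) t0 e1 : 0 < e1 ->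
  (forall j, (j < 5)%nat -> derivable_pt_lim (fun t => c t j) t0 (c' j)) ->
  exists del, 0 < del /\ forall h, h <> 0 -> Rabs h < del ->
    forall j, (j < 5)%nat -> Rabs ((c (t0 + h) j - c t0 j) / h - c' j) < e1.
Proof.
  intros he1 Hcd.
  assert (Q : forall j, (j < 5)%nat -> exists dj, 0 < dj /\ forall h, h <> 0 -> Rabs h < dj ->
            Rabs ((c (t0 + h) j - c t0 j) / h - c' j) < e1).
  { intros j hj. destruct (Hcd j hj e1 he1) as [dj Hdj].
    exists (pos dj); split; [apply cond_pos| exact Hdj]. }
  destruct (Q 0%nat ltac:(lia)) as [q0 [h0 Q0]]; destruct (Q 1%nat ltac:(lia)) as [q1 [h1 Q1]];
    destruct (Q 2%nat ltac:(lia)) as [q2 [h2 Q2]]; destruct (Q 3%nat ltac:(lia)) as [q3 [h3 Q3]];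
    destruct (Q 4%nat ltac:(lia)) as [q4 [h4 Q4]].
  destruct (Rmin5_pos q0 q1 q2 q3 q4 h0 h1 h2 h3 h4) as [hd [l0 [l1 [l2 [l3 l4]]]]].
  eexists; split; [exact hd|]. intros h hh hh2 j hj.
  destruct j as [|[|[|[|[|j]]]]]; [apply Q0|apply Q1|apply Q2|apply Q3|apply Q4|lia]; auto; lra.
Qed.


Lemma Rabs_le_succ_of_close x c e : Rabs (x - c) < e -> e <= 1 -> Rabs x <= Rabs c + 1.
Proof.
  intros H he. replace x with ((x - c) + c) by ring.
  eapply Rle_trans; [apply Rabs_triang|]. lra.
Qed.

Lemma sum5_quotient_error (a d c' : nat -> R) (h Rm e1 eps : R) :
  h <> 0 -> 0 < eps -> e1 <= 1 -> e1 <= eps / (2 * (sum5 (fun i => Rabs (a i)) + 1)) ->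
  (forall j, (j < 5)%nat -> Rabs (d j / h - c' j) < e1) ->
  Rabs Rm <= eps / (4 * sum5 (fun i => Rabs (c' i) + 1)) * sum5 (fun i => Rabs (d i)) ->
  Rabs (sum5 (fun i => a i * (d i / h - c' i)) + Rm / h) < eps.
Proof.
  intros hh he he1 he1' Q D.
  set (G := sum5 (fun i => Rabs (a i))) in *. set (C := sum5 (fun i => Rabs (c' i) + 1)) in *.
  assert (hG : 0 <= G) by (apply sum5_nonneg; intros; apply Rabs_pos).
  assert (hC : 1 <= C).
  { unfold C, sum5. pose proof (Rabs_pos (c' 0%nat)); pose proof (Rabs_pos (c' 1%nat));
      pose proof (Rabs_pos (c' 2%nat)); pose proof (Rabs_pos (c' 3%nat));
      pose proof (Rabs_pos (c' 4%nat)).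
    lra. }
  assert (he1_pos : 0 < e1)
    by (pose proof (Q 0%nat ltac:(lia)); pose proof (Rabs_pos (d 0%nat / h - c' 0%nat)); lra).
  assert (hhp : 0 < Rabs h) by (apply Rabs_pos_lt; auto).
  assert (Qb : forall j, (j < 5)%nat -> Rabs (d j / h) <= Rabs (c' j) + 1)
    by (intros j hj; apply (Rabs_le_succ_of_close _ _ e1); auto).
  eapply Rle_lt_trans; [apply Rabs_triang|].
  assert (T1 : Rabs (sum5 (fun i => a i * (d i / h - c' i))) <= G * e1).
  { eapply Rle_trans; [apply sum5_abs|]. unfold G.
    replace (sum5 (fun i => Rabs (a i)) * e1) with (sum5 (fun i => Rabs (a i) * e1))
      by (unfold sum5; ring).
    apply sum5_le. intros i hi. rewrite Rabs_mult.
    apply Rmult_le_compat_l; [apply Rabs_pos| apply Rlt_le; auto]. }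
  assert (T2 : Rabs (Rm / h) <= eps / (4 * C) * C).
  { unfold Rdiv at 1. rewrite Rabs_mult, Rabs_inv.
    apply Rle_trans with (eps / (4 * C) * sum5 (fun i => Rabs (d i)) * / Rabs h).
    { apply Rmult_le_compat_r; [apply Rlt_le, Rinv_0_lt_compat; lra| exact D]. }
    rewrite Rmult_assoc. apply Rmult_le_compat_l; [apply Rlt_le, Rdiv_lt_0_compat; lra|].
    replace (sum5 (fun i => Rabs (d i)) * / Rabs h) with (sum5 (fun i => Rabs (d i / h)))
      by (unfold sum5, Rdiv; rewrite !Rabs_mult, !Rabs_inv; ring).
    unfold C; apply sum5_le; intros i hi; apply Qb; auto. }
  assert (T3 : G * e1 <= G * (eps / (2 * (G + 1)))) by (apply Rmult_le_compat_l; lra).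
  assert (T4 : G * (eps / (2 * (G + 1))) < eps / 2).
  { apply Rlt_le_trans with ((G + 1) * (eps / (2 * (G + 1)))).
    { apply Rmult_lt_compat_r; [apply Rdiv_lt_0_compat|]; lra. }
    right; field; lra. }
  assert (T5 : eps / (4 * C) * C = eps / 4) by (field; lra).
  lra.
Qed.

Section FirstOrder.

Variables (f : (nat -> R) -> R) (g : nat -> (nat -> R) -> R).
Hypothesis f_partials :
  forall i, (i < 5)%nat -> forall z, derivable_pt_lim (fun t => f (upd z i t)) (z i) (g i z).
Hypothesis partials_cont : forall i, (i < 5)%nat -> cont5 (g i).

Lemma first_order_expansion5 x eps : 0 < eps -> exists d, 0 < d /\ forall y, near5 x y d ->
  Rabs (f y - f x - sum5 (fun i => g i x * (y i - x i))) <= eps * sum5 (fun i => Rabs (y i - x i)).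
Proof.
  intros he.
  destruct (partials_cont 0%nat ltac:(lia) x eps he) as [d0 [h0 D0]].
  destruct (partials_cont 1%nat ltac:(lia) x eps he) as [d1 [h1 D1]].
  destruct (partials_cont 2%nat ltac:(lia) x eps he) as [d2 [h2 D2]].
  destruct (partials_cont 3%nat ltac:(lia) x eps he) as [d3 [h3 D3]].
  destruct (partials_cont 4%nat ltac:(lia) x eps he) as [d4 [h4 D4]].
  destruct (Rmin5_pos d0 d1 d2 d3 d4 h0 h1 h2 h3 h4) as [hd [l0 [l1 [l2 [l3 l4]]]]].
  set (d := Rmin (Rmin (Rmin d0 d1) (Rmin d2 d3)) d4) in *.
  exists d; split; auto. intros y Hy.
  assert (Hstep : forall k dk, (k < 5)%nat -> d <= dk ->
    (forall z, (forall j, (j < 5)%nat -> Rabs (z j - x j) < dk) ->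
               (forall j, (5 <= j)%nat -> z j = x j) -> Rabs (g k z - g k x) < eps) ->
    Rabs (f (splice x y (S k)) - f (splice x y k) - g k x * (y k - x k)) <= eps * Rabs (y k - x k)).
  { intros k dk hk hdk Dk. apply (splice_step_linear f (g k) x y k d); auto.
    intros z [Hz Hz5]. apply Dk; auto. intros j hj. specialize (Hz j hj). lra. }
  assert (W0 : splice x y 0 = x) by (apply functional_extensionality; reflexivity).
  assert (W5 : splice x y 5 = y).
  { apply functional_extensionality; intro j. unfold splice.
    destruct (Nat.ltb_spec j 5); auto. symmetry; apply (proj2 Hy); lia. }
  assert (E : f y - f x - sum5 (fun i => g i x * (y i - x i))
              = sum5 (fun k => f (splice x y (S k)) - f (splice x y k) - g k x * (y k - x k))).
  { replace (f y) with (f (splice x y 5)) by (rewrite W5; auto).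
    replace (f x) with (f (splice x y 0)) by (rewrite W0; auto).
    unfold sum5; ring. }
  rewrite E. eapply Rle_trans; [apply sum5_abs|].
  pose proof (Hstep 0%nat d0 ltac:(lia) l0 D0); pose proof (Hstep 1%nat d1 ltac:(lia) l1 D1);
    pose proof (Hstep 2%nat d2 ltac:(lia) l2 D2); pose proof (Hstep 3%nat d3 ltac:(lia) l3 D3);
    pose proof (Hstep 4%nat d4 ltac:(lia) l4 D4).
  unfold sum5; lra.
Qed.

(* Write f(c(t0+h)) - f(c t0) with the first order expansion at c t0; the increments
   c(t0+h) - c t0 are O(h), so the remainder is o(h). *)
Lemma chain_rule5 (c : R -> nat -> R) (c' : nat -> R) t0 :
  (forall t j, (5 <= j)%nat -> c t j = c t0 j) ->
  (forall j, (j < 5)%nat -> derivable_pt_lim (fun t => c t j) t0 (c' j)) ->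
  derivable_pt_lim (fun t => f (c t)) t0 (sum5 (fun i => g i (c t0) * c' i)).
Proof.
  intros Hc5 Hcd eps he.
  set (x := c t0).
  set (G := sum5 (fun i => Rabs (g i x))).
  set (C := sum5 (fun i => Rabs (c' i) + 1)).
  assert (hG : 0 <= G) by (apply sum5_nonneg; intros; apply Rabs_pos).
  assert (hC : forall j, (j < 5)%nat -> Rabs (c' j) + 1 <= C).
  { intros j hj. unfold C, sum5.
    pose proof (Rabs_pos (c' 0%nat)); pose proof (Rabs_pos (c' 1%nat)); pose proof (Rabs_pos (c' 2%nat));
      pose proof (Rabs_pos (c' 3%nat)); pose proof (Rabs_pos (c' 4%nat)).
    destruct j as [|[|[|[|[|j]]]]]; lra || lia. }
  assert (hC1 : 1 <= C) by (pose proof (hC 0%nat ltac:(lia)); pose proof (Rabs_pos (c' 0%nat)); lra).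
  set (e1 := Rmin 1 (eps / (2 * (G + 1)))).
  assert (he1 : 0 < e1) by (apply Rmin_pos; [lra| apply Rdiv_lt_0_compat; lra]).
  destruct (difference_quotients5 c c' t0 e1 he1 Hcd) as [q [hq Q]].
  destruct (first_order_expansion5 x (eps / (4 * C))) as [d [hd D]].
  { apply Rdiv_lt_0_compat; lra. }
  assert (hdel : 0 < Rmin q (d / C)) by (apply Rmin_pos; [|apply Rdiv_lt_0_compat]; lra).
  exists (mkposreal _ hdel). intros h hh hh2. simpl in hh2.
  pose proof (Rmin_l q (d / C)); pose proof (Rmin_r q (d / C)).
  set (y := c (t0 + h)).
  assert (Qj : forall j, (j < 5)%nat -> Rabs ((y j - x j) / h - c' j) < e1)
    by (intros; apply Q; auto; lra).
  assert (Hy : near5 x y d).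
  { split; [|intros; unfold y, x; apply Hc5; auto].
    intros j hj. replace (y j - x j) with (h * ((y j - x j) / h)) by (field; auto).
    rewrite Rabs_mult. apply Rle_lt_trans with (Rabs h * C).
    { apply Rmult_le_compat_l; [apply Rabs_pos|].
      apply Rle_trans with (Rabs (c' j) + 1); [|apply hC, hj].
      apply (Rabs_le_succ_of_close _ _ e1); [apply Qj; auto| apply Rmin_l]. }
    apply Rlt_le_trans with (d / C * C); [apply Rmult_lt_compat_r; lra| right; field; lra]. }
  change (Rabs ((f y - f x) / h - sum5 (fun i => g i x * c' i)) < eps).
  replace ((f y - f x) / h - sum5 (fun i => g i x * c' i))
    with (sum5 (fun i => g i x * ((y i - x i) / h - c' i))
          + (f y - f x - sum5 (fun i => g i x * (y i - x i))) / h)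
    by (unfold sum5; field; auto).
  apply (sum5_quotient_error _ _ _ _ _ e1); auto; [apply Rmin_l| apply Rmin_r].
Qed.

End FirstOrder.

(** * Spherical coordinates *)

Definition sphere_point (u v th ph : R) : nat -> R := fun j =>
  match j with
  | 0%nat => u | 1%nat => v | 2%nat => sin th * cos ph | 3%nat => sin th * sin ph
  | 4%nat => cos th | _ => 0
  end.

Lemma continuous4_sphere_point j : continuous4 (fun u v th ph => sphere_point u v th ph j).
Proof. destruct j as [|[|[|[|[|j]]]]]; simpl; continuity4. Qed.

Lemma continuous4_cont5_comp (g : (nat -> R) -> R) :
  cont5 g -> continuous4 (fun u v th ph => g (sphere_point u v th ph)).
Proof.
  intros Hg a b c d eps he.
  destruct (Hg (sphere_point a b c d) eps he) as [d0 [hd0 D0]].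
  destruct (continuous4_sphere_point 0 a b c d d0 hd0) as [e0 [he0 E0]].
  destruct (continuous4_sphere_point 1 a b c d d0 hd0) as [e1 [he1 E1]].
  destruct (continuous4_sphere_point 2 a b c d d0 hd0) as [e2 [he2 E2]].
  destruct (continuous4_sphere_point 3 a b c d d0 hd0) as [e3 [he3 E3]].
  destruct (continuous4_sphere_point 4 a b c d d0 hd0) as [e4 [he4 E4]].
  destruct (Rmin5_pos e0 e1 e2 e3 e4 he0 he1 he2 he3 he4) as [hd [l0 [l1 [l2 [l3 l4]]]]].
  eexists; split; [exact hd|].
  intros a' b' c' d' h1 h2 h3 h4. apply D0.
  - intros j hj. destruct j as [|[|[|[|[|j]]]]];
      [apply E0|apply E1|apply E2|apply E3|apply E4|lia]; lra.
  - intros j hj. destruct j as [|[|[|[|[|j]]]]]; [lia..|reflexivity].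
Qed.

Lemma smooth5_C1 Phi : smooth5 Phi -> exists g : nat -> (nat -> R) -> R,
  (forall i, (i < 5)%nat -> forall z,
     derivable_pt_lim (fun t => lift5 Phi (upd z i t)) (z i) (g i z)) /\
  (forall i, (i < 5)%nat -> cont5 (g i)).
Proof.
  intros H. destruct (H 1%nat) as [_ H1].
  destruct (H1 0%nat ltac:(lia)) as [g0 [G0 [C0 _]]].
  destruct (H1 1%nat ltac:(lia)) as [g1 [G1 [C1 _]]].
  destruct (H1 2%nat ltac:(lia)) as [g2 [G2 [C2 _]]].
  destruct (H1 3%nat ltac:(lia)) as [g3 [G3 [C3 _]]].
  destruct (H1 4%nat ltac:(lia)) as [g4 [G4 [C4 _]]].
  exists (fun i => match i with 0%nat => g0 | 1%nat => g1 | 2%nat => g2 | 3%nat => g3 | _ => g4 end).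
  split; intros i hi; destruct i as [|[|[|[|[|i]]]]]; auto; lia.
Qed.

(* The vartheta-derivative is sin(theta) times a continuous function: this is what makes
   |slashed nabla phi|^2 r^2 sin(theta), which contains sin(theta)^-2 (d_vartheta phi)^2,
   a continuous integrand on the whole sphere. *)
Lemma spherical_partials_continuous Phi du dv dth dph :
  smooth5 Phi -> partials Phi du dv dth dph ->
  exists D0 D1 DTH Q : R -> R -> R -> R -> R,
    continuous4 D0 /\ continuous4 D1 /\ continuous4 DTH /\ continuous4 Q /\
    forall u v th ph, du u v th ph = D0 u v th ph /\ dv u v th ph = D1 u v th ph /\
      dth u v th ph = DTH u v th ph /\ dph u v th ph = sin th * Q u v th ph.
Proof.
  intros Hs Hp. destruct (smooth5_C1 Phi Hs) as [g [Hg Hc]].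
  set (gX i u v th ph := g i (sphere_point u v th ph)).
  exists (gX 0%nat), (gX 1%nat),
    (fun u v th ph => gX 2%nat u v th ph * (cos th * cos ph) + gX 3%nat u v th ph * (cos th * sin ph)
                      + gX 4%nat u v th ph * (- sin th)),
    (fun u v th ph => gX 3%nat u v th ph * cos ph - gX 2%nat u v th ph * sin ph).
  assert (J : forall i, (i < 5)%nat -> continuous4 (gX i))
    by (intros; apply continuous4_cont5_comp; auto).
  pose proof (J 0%nat ltac:(lia)); pose proof (J 1%nat ltac:(lia)); pose proof (J 2%nat ltac:(lia));
    pose proof (J 3%nat ltac:(lia)); pose proof (J 4%nat ltac:(lia)).
  split; [auto|]. split; [auto|]. split; [continuity4|]. split; [continuity4|].
  intros u v th ph. destruct (Hp u v th ph) as [Pu [Pv [Pth Pph]]].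
  split; [|split; [|split]].
  - eapply uniqueness_limite; [exact Pu| exact (Hg 0%nat ltac:(lia) (sphere_point u v th ph))].
  - eapply uniqueness_limite; [exact Pv| exact (Hg 1%nat ltac:(lia) (sphere_point u v th ph))].
  - eapply uniqueness_limite; [exact Pth|].
    set (c' := fun j => match j with 2%nat => cos th * cos ph | 3%nat => cos th * sin ph
                                   | 4%nat => - sin th | _ => 0 end).
    replace (gX 2%nat u v th ph * (cos th * cos ph) + gX 3%nat u v th ph * (cos th * sin ph)
             + gX 4%nat u v th ph * - sin th)
      with (sum5 (fun i => g i (sphere_point u v th ph) * c' i)) by (unfold sum5, gX; simpl; ring).
    apply (chain_rule5 (lift5 Phi) g Hg Hc (fun t => sphere_point u v t ph)).
    + intros t j hj. destruct j as [|[|[|[|[|j]]]]]; [lia..|reflexivity].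
    + intros j hj. destruct j as [|[|[|[|[|j]]]]]; try lia; simpl; apply is_derive_Reals;
        auto_derive; auto; ring.
  - eapply uniqueness_limite; [exact Pph|].
    set (c' := fun j => match j with 2%nat => - sin th * sin ph | 3%nat => sin th * cos ph
                                   | _ => 0 end).
    replace (sin th * (gX 3%nat u v th ph * cos ph - gX 2%nat u v th ph * sin ph))
      with (sum5 (fun i => g i (sphere_point u v th ph) * c' i)) by (unfold sum5, gX; simpl; ring).
    apply (chain_rule5 (lift5 Phi) g Hg Hc (fun t => sphere_point u v th t)).
    + intros t j hj. destruct j as [|[|[|[|[|j]]]]]; [lia..|reflexivity].
    + intros j hj. destruct j as [|[|[|[|[|j]]]]]; try lia; simpl; apply is_derive_Reals;
        auto_derive; auto; ring.
Qed.

(** * The Reissner-Nordstrom interior *)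

Definition Om2_star (M e : R) (Rf : R -> R) (s : R) : R :=
  - (1 - 2 * M / Rf s + e ^ 2 / (Rf s) ^ 2).

Lemma RN_between_horizons M e : 0 < Rabs e < M -> 0 < rminus M e /\
  forall r, rminus M e < r < rplus M e -> 1 - 2 * M / r + e ^ 2 / r ^ 2 < 0.
Proof.
  intros [he hM].
  assert (e2 : Rabs e ^ 2 = e ^ 2) by (rewrite RPow_abs; apply Rabs_pos_eq, pow2_ge_0).
  set (S := sqrt (M ^ 2 - e ^ 2)).
  assert (S2 : S * S = M ^ 2 - e ^ 2) by (apply sqrt_sqrt; nra).
  assert (S0 : 0 <= S) by apply sqrt_pos.
  assert (SM : S < M) by nra.
  unfold rminus, rplus; fold S. split; [lra|].
  intros r [h1 h2].
  assert (Q : r ^ 2 - 2 * M * r + e ^ 2 < 0).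
  { replace (r ^ 2 - 2 * M * r + e ^ 2) with ((r - (M + S)) * (r - (M - S))) by nra. nra. }
  replace (1 - 2 * M / r + e ^ 2 / r ^ 2) with ((r ^ 2 - 2 * M * r + e ^ 2) / r ^ 2)
    by (field; lra).
  apply Rdiv_neg_pos; nra.
Qed.

Lemma RN_rfun_facts M e Rf : 0 < Rabs e < M -> RN_rfun M e Rf ->
  (forall s, 0 < rminus M e < Rf s) /\ (forall s, 0 < Om2_star M e Rf s) /\
  (forall s, is_derive Rf s (- Om2_star M e Rf s)) /\
  (forall s1 s2, s1 <= s2 -> Rf s2 <= Rf s1).
Proof.
  intros hMe [HR1 [HR2 _]].
  destruct (RN_between_horizons M e hMe) as [hrm Hneg].
  assert (P2 : forall s, 0 < Om2_star M e Rf s).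
  { intros s. unfold Om2_star. assert (H := Hneg (Rf s) (HR1 s)). lra. }
  assert (P3 : forall s, is_derive Rf s (- Om2_star M e Rf s)).
  { intros s. apply is_derive_Reals. unfold Om2_star. rewrite Ropp_involutive. apply HR2. }
  split; [intros s; split; [auto| apply HR1]|]. split; [auto|]. split; [auto|].
  intros s1 s2 hs. destruct (Req_dec s1 s2) as [->|ne]; [lra|].
  destruct (MVT_cor2 Rf (fun s => - Om2_star M e Rf s) s1 s2 ltac:(lra)) as [c [hc _]].
  { intros c _. apply is_derive_Reals, P3. }
  pose proof (P2 c). nra.
Qed.

Lemma Om2_star_continuous M e Rf : 0 < Rabs e < M -> RN_rfun M e Rf ->
  forall s, continuity_pt (Om2_star M e Rf) s.
Proof.
  intros hMe hR s.
  destruct (RN_rfun_facts M e Rf hMe hR) as [P1 [P2 [P3 P4]]].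
  apply derivable_continuous_pt.
  exists ((2 * M / (Rf s) ^ 2 - 2 * e ^ 2 / (Rf s) ^ 3) * Om2_star M e Rf s).
  apply is_derive_Reals. unfold Om2_star at 1.
  assert (0 < Rf s) by (destruct (P1 s); lra).
  auto_derive.
  - repeat split; try (exists (- Om2_star M e Rf s); apply P3); apply Rgt_not_eq; try nra; auto.
  - replace (Derive (fun x => Rf x) s) with (- Om2_star M e Rf s)
      by (symmetry; apply is_derive_unique, P3).
    unfold Om2_star. field. lra.
Qed.

Lemma Rf_continuous M e Rf : 0 < Rabs e < M -> RN_rfun M e Rf -> forall s, continuity_pt Rf s.
Proof.
  intros hMe hR s. destruct (RN_rfun_facts M e Rf hMe hR) as [_ [_ [P3 _]]].
  apply derivable_continuous_pt. exists (- Om2_star M e Rf s). apply is_derive_Reals, P3.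
Qed.

Lemma exp_le_mono x y : x <= y -> exp x <= exp y.
Proof. intros h; destruct (Req_dec x y) as [->|n]; [lra| left; apply exp_increasing; lra]. Qed.

(* Omega^2 e^{4 beta r^*} is nonincreasing where -d_u Omega / Omega >= beta. *)
Lemma Om2_star_blueshift_decay M e Rf rblue rsb beta : 0 < Rabs e < M -> RN_rfun M e Rf ->
  (forall r, rminus M e < r <= rblue -> - (1 / (2 * r ^ 2) * (M - e ^ 2 / r)) >= beta) ->
  Rf rsb = rblue ->
  forall s, rsb <= s -> Om2_star M e Rf s <= Om2_star M e Rf rsb * exp (- (4 * beta) * (s - rsb)).
Proof.
  intros hMe hR hb hrsb.
  destruct (RN_rfun_facts M e Rf hMe hR) as [P1 [P2 [P3 P4]]].
  set (z := fun s => Om2_star M e Rf s * exp (4 * beta * s)).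
  set (z' := fun s => Om2_star M e Rf s * (2 * M / (Rf s) ^ 2 - 2 * e ^ 2 / (Rf s) ^ 3 + 4 * beta)
                      * exp (4 * beta * s)).
  assert (Dz : forall s, is_derive z s (z' s)).
  { intros s. unfold z, z', Om2_star. assert (0 < Rf s) by (destruct (P1 s); lra).
    auto_derive.
    - repeat split; try (exists (- Om2_star M e Rf s); apply P3); apply Rgt_not_eq; try nra; auto.
    - replace (Derive (fun x => Rf x) s) with (- Om2_star M e Rf s)
        by (symmetry; apply is_derive_unique, P3).
      unfold Om2_star. field. lra. }
  assert (Hz : forall s, rsb <= s -> z s <= z rsb).
  { intros s hs. destruct (Req_dec s rsb) as [->|ne]; [lra|].
    destruct (MVT_cor2 z z' rsb s ltac:(lra)) as [c [hc hc2]].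
    { intros c _. apply is_derive_Reals, Dz. }
    assert (hc1 : Rf c <= rblue) by (rewrite <- hrsb; apply P4; lra).
    assert (hk := hb (Rf c) (conj (proj2 (P1 c)) hc1)).
    assert (hr : 0 < Rf c) by (destruct (P1 c); lra).
    assert (K : 2 * M / (Rf c) ^ 2 - 2 * e ^ 2 / (Rf c) ^ 3 + 4 * beta <= 0).
    { replace (2 * M / (Rf c) ^ 2 - 2 * e ^ 2 / (Rf c) ^ 3)
        with (4 * (1 / (2 * Rf c ^ 2) * (M - e ^ 2 / Rf c))) by (field; lra). lra. }
    assert (z' c <= 0).
    { unfold z'. pose proof (P2 c); pose proof (exp_pos (4 * beta * c)).
      apply Rmult_le_0_r; [|lra]. apply Rmult_le_0_l; lra. }
    nra. }
  intros s hs. specialize (Hz s hs). unfold z in Hz.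
  replace (- (4 * beta) * (s - rsb)) with (4 * beta * rsb + - (4 * beta * s)) by ring.
  rewrite exp_plus, exp_Ropp.
  pose proof (exp_pos (4 * beta * s)).
  apply (Rmult_le_reg_r (exp (4 * beta * s))); auto.
  replace (Om2_star M e Rf rsb * (exp (4 * beta * rsb) * / exp (4 * beta * s)) * exp (4 * beta * s))
    with (Om2_star M e Rf rsb * exp (4 * beta * rsb)) by (field; lra).
  lra.
Qed.

(** * Integrals over the sphere *)

Definition sph (F : R -> R -> R) : R := RInt (fun th => RInt (fun ph => F th ph) 0 (2 * PI)) 0 PI.

Lemma continuous4_RInt_ph F :
  continuous4 F -> continuous4 (fun th u v _ => RInt (fun ph => F u v th ph) 0 (2 * PI)).
Proof.
  intros H.
  apply (continuous4_comp (fun _ th u v => RInt (fun ph => F u v th ph) 0 (2 * PI))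
           (fun _ _ _ _ => 0) (fun th _ _ _ => th) (fun _ u _ _ => u) (fun _ _ v _ => v));
    [|continuity4 ..].
  apply (continuous4_RInt0 (fun ph th u v => F u v th ph)).
  apply (continuous4_comp F (fun _ _ u _ => u) (fun _ _ _ v => v) (fun _ th _ _ => th)
           (fun ph _ _ _ => ph)); continuity4.
Qed.

Lemma continuous4_sph F : continuous4 F -> continuous4 (fun u v _ _ => sph (F u v)).
Proof.
  intros H.
  apply (continuous4_comp (fun _ u v _ => sph (F u v)) (fun _ _ _ _ => 0) (fun u _ _ _ => u)
           (fun _ v _ _ => v) (fun _ _ _ _ => 0)); [|continuity4 ..].
  apply (continuous4_RInt0 (fun th u v _ => RInt (fun ph => F u v th ph) 0 (2 * PI))).
  apply continuous4_RInt_ph, H.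
Qed.

Lemma PI_ge0 : 0 <= PI.
Proof. pose proof PI_RGT_0; lra. Qed.

Lemma ex_RInt_sph_inner F u v : continuous4 F ->
  ex_RInt (fun th => RInt (fun ph => F u v th ph) 0 (2 * PI)) 0 PI.
Proof.
  intros H.
  apply (continuous4_ex_RInt0 (fun th u v _ => RInt (fun ph => F u v th ph) 0 (2 * PI)) u v 0).
  apply continuous4_RInt_ph, H.
Qed.

Lemma sph_le F G u v : continuous4 F -> continuous4 G ->
  (forall th ph, 0 <= th <= PI -> 0 <= ph <= 2 * PI -> F u v th ph <= G u v th ph) ->
  sph (F u v) <= sph (G u v).
Proof.
  intros HF HG Hle.
  apply RInt_le_R; [apply PI_ge0| apply (ex_RInt_sph_inner F u v HF)
                   | apply (ex_RInt_sph_inner G u v HG)|].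
  intros th hth. pose proof PI_ge0.
  apply RInt_le_R; [lra| apply (continuous4_ex_RInt3 F u v th _ _ HF)
                   | apply (continuous4_ex_RInt3 G u v th _ _ HG)|].
  intros ph hph. apply Hle; lra.
Qed.

Lemma sph_ge0 F u v : continuous4 F ->
  (forall th ph, 0 <= th <= PI -> 0 <= ph <= 2 * PI -> 0 <= F u v th ph) -> 0 <= sph (F u v).
Proof.
  intros HF H0.
  apply RInt_ge0_R; [apply PI_ge0| apply (ex_RInt_sph_inner F u v HF)|].
  intros th hth. pose proof PI_ge0.
  apply RInt_ge0_R; [lra| apply (continuous4_ex_RInt3 F u v th _ _ HF)|].
  intros ph hph. apply H0; lra.
Qed.

Lemma sph_linear c k F G u v : continuous4 F -> continuous4 G ->
  sph (fun th ph => c * F u v th ph + k * G u v th ph) = c * sph (F u v) + k * sph (G u v).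
Proof.
  intros HF HG. unfold sph.
  pose proof (ex_RInt_sph_inner F u v HF) as IF; pose proof (ex_RInt_sph_inner G u v HG) as IG.
  rewrite <- (RInt_scal_R _ c) by exact IF. rewrite <- (RInt_scal_R _ k) by exact IG.
  rewrite <- RInt_plus_R by (apply ex_RInt_scal_R; assumption).
  apply RInt_ext. intros th _.
  pose proof (continuous4_ex_RInt3 F u v th 0 (2 * PI) HF) as JF.
  pose proof (continuous4_ex_RInt3 G u v th 0 (2 * PI) HG) as JG.
  rewrite <- (RInt_scal_R _ c) by exact JF. rewrite <- (RInt_scal_R _ k) by exact JG.
  rewrite <- RInt_plus_R by (apply ex_RInt_scal_R; assumption).
  reflexivity.
Qed.

Lemma sph_RInt_swap F u a b : continuous4 F ->
  RInt (fun v => sph (F u v)) a b = sph (fun th ph => RInt (fun v => F u v th ph) a b).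
Proof.
  intros H. unfold sph.
  rewrite (RInt_swap (fun v th => RInt (fun ph => F u v th ph) 0 (2 * PI))).
  - apply RInt_ext. intros th _. apply (RInt_swap (fun v ph => F u v th ph)).
    apply (continuous4_comp F (fun _ _ _ _ => u) (fun v _ _ _ => v) (fun _ _ _ _ => th)
             (fun _ ph _ _ => ph)); continuity4.
  - apply (continuous4_comp (fun th u v _ => RInt (fun ph => F u v th ph) 0 (2 * PI))
             (fun _ th _ _ => th) (fun _ _ _ _ => u) (fun v _ _ _ => v) (fun _ _ _ _ => 0));
      [apply continuous4_RInt_ph, H| continuity4 ..].
Qed.

Lemma RInt_rel_intro f a b : ex_RInt f a b -> Defs.RInt f a b (RInt f a b).
Proof. intros H. exists (ex_RInt_Reals_0 f a b H). symmetry. apply RInt_Reals. Qed.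

Lemma RInt_rel_elim f a b I : Defs.RInt f a b I -> ex_RInt f a b /\ RInt f a b = I.
Proof.
  intros [pr E]. split; [apply ex_RInt_Reals_1; auto|]. rewrite (RInt_Reals f a b pr); auto.
Qed.

Lemma SphInt_le_sph (h : R -> R -> R) C u v k : continuous4 C ->
  (forall th ph, 0 <= th <= PI -> 0 <= ph <= 2 * PI -> h th ph * sin th <= C u v th ph) ->
  SphInt h k -> k <= sph (C u v).
Proof.
  intros HC Hle [Gt [HG HI]].
  destruct (RInt_rel_elim _ _ _ _ HI) as [exG <-].
  apply RInt_le_R; [apply PI_ge0| exact exG| apply (ex_RInt_sph_inner C u v HC)|].
  intros th hth. destruct (RInt_rel_elim _ _ _ _ (HG th hth)) as [exg <-].
  pose proof PI_ge0.
  apply RInt_le_R; [lra| exact exg| apply (continuous4_ex_RInt3 C u v th _ _ HC)|].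
  intros ph hph. apply Hle; lra.
Qed.

Lemma FluxInt_sph (h : R -> R -> R -> R) G x a b : a <= b -> continuous4 G ->
  (forall th ph, ex_RInt (fun s => h s th ph) a b) ->
  (forall s th ph, a <= s <= b -> h s th ph * sin th = G x s th ph) ->
  FluxInt h a b (RInt (fun s => sph (G x s)) a b).
Proof.
  intros hab HG Hex Heq.
  set (Gs := fun (_ v th ph : R) => RInt (fun s => G v s th ph) a b).
  assert (HGs : continuous4 Gs).
  { apply (continuous4_comp (fun _ v th ph => RInt (fun s => G v s th ph) a b) (fun _ _ _ _ => 0)
             (fun _ v _ _ => v) (fun _ _ th _ => th) (fun _ _ _ ph => ph)); [|continuity4 ..].
    apply (continuous4_RInt0 (fun s v th ph => G v s th ph)).
    apply (continuous4_comp G (fun _ v _ _ => v) (fun s _ _ _ => s) (fun _ _ th _ => th)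
             (fun _ _ _ ph => ph)); continuity4. }
  assert (E : forall th ph, RInt (fun s => h s th ph) a b * sin th = Gs 0 x th ph).
  { intros th ph. rewrite Rmult_comm, <- RInt_scal_R by apply Hex. apply RInt_ext.
    intros s hs. rewrite Rmin_left, Rmax_right in hs by exact hab.
    rewrite Rmult_comm; apply Heq; lra. }
  rewrite sph_RInt_swap by exact HG.
  exists (fun th ph => RInt (fun s => h s th ph) a b). split.
  { intros th ph _ _. apply RInt_rel_intro, Hex. }
  exists (fun th => RInt (fun ph => Gs 0 x th ph) 0 (2 * PI)). split.
  - intros th _. rewrite <- (RInt_ext (fun ph => RInt (fun s => h s th ph) a b * sin th))
      by (intros; apply E).
    apply RInt_rel_intro. eapply ex_RInt_ext; [intros; symmetry; apply E|].
    apply (continuous4_ex_RInt3 Gs 0 x th _ _ HGs).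
  - apply RInt_rel_intro, (ex_RInt_sph_inner Gs 0 x HGs).
Qed.

Lemma continuous4_RInt_sph C v1 v2 : continuous4 C ->
  continuous4 (fun u _ _ _ => RInt (fun v => sph (C u v)) v1 v2).
Proof.
  intros H. apply (continuous4_RInt_param (fun v u => sph (C u v))).
  apply (continuous4_comp (fun u v _ _ => sph (C u v)) (fun _ u _ _ => u) (fun v _ _ _ => v)
           (fun _ _ _ _ => 0) (fun _ _ _ _ => 0)); [apply continuous4_sph, H| continuity4 ..].
Qed.

Lemma RectInt_le_sph h C u1 u2 v1 v2 I : u1 <= u2 -> v1 <= v2 -> continuous4 C ->
  (forall u v th ph, u1 <= u <= u2 -> v1 <= v <= v2 -> 0 <= th <= PI -> 0 <= ph <= 2 * PI ->
     h u v th ph * sin th <= C u v th ph) ->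
  RectInt h u1 u2 v1 v2 I -> I <= RInt (fun u => RInt (fun v => sph (C u v)) v1 v2) u1 u2.
Proof.
  intros hu hv HC Hle [G [HG HI]].
  destruct (RInt_rel_elim _ _ _ _ HI) as [exG <-].
  pose proof (continuous4_sph C HC) as HS.
  apply RInt_le_R; [exact hu| exact exG
                   | apply (continuous4_ex_RInt0 _ 0 0 0 _ _ (continuous4_RInt_sph C v1 v2 HC))|].
  intros u hu'. destruct (HG u hu') as [K [HK HKI]].
  destruct (RInt_rel_elim _ _ _ _ HKI) as [exK <-].
  apply RInt_le_R; [exact hv| exact exK
                   | apply (continuous4_ex_RInt1 (fun u v _ _ => sph (C u v)) u 0 0 _ _ HS)|].
  intros v hv'. apply (SphInt_le_sph (h u v) C u v); auto.
Qed.

Lemma ex_RInt_RInt2 (f : R -> R -> R) u1 u2 v1 v2 : continuous4 (fun u v _ _ => f u v) ->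
  ex_RInt (fun u => RInt (fun v => f u v) v1 v2) u1 u2.
Proof.
  intros H. apply (continuous4_ex_RInt0 (fun u _ _ _ => RInt (fun v => f u v) v1 v2) 0 0 0).
  apply (continuous4_RInt_param (fun v u => f u v)).
  apply (continuous4_comp (fun u v _ _ => f u v) (fun _ u _ _ => u) (fun v _ _ _ => v)
           (fun _ _ _ _ => 0) (fun _ _ _ _ => 0)); continuity4.
Qed.

Section BulkIntegration.

Variables (A Bf HU HV : R -> R -> R -> R -> R) (b : R -> R) (c1 u1 u2 vs vh B1 B2 : R).
Hypotheses (HA : continuous4 A) (HBf : continuous4 Bf) (HHU : continuous4 HU)
  (HHV : continuous4 HV) (Hb : continuous4 (fun _ v _ _ => b v)).
Hypotheses (hc1 : 0 <= c1) (hu : u1 <= u2) (hv : vs <= vh)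
  (b_ge0 : forall v, vs <= v <= vh -> 0 <= b v).
Hypotheses (A_le : forall u v th ph, 0 <= th <= PI -> A u v th ph <= HU u v th ph)
  (Bf_le : forall u v th ph, 0 <= th <= PI -> Bf u v th ph <= HV u v th ph).
Hypotheses (HU_le : forall u, u1 <= u <= u2 -> RInt (fun v => sph (HU u v)) vs vh <= B1)
  (HV_le : forall v, vs <= v <= vh -> RInt (fun u => sph (HV u v)) u1 u2 <= B2).

Let SA := continuous4_sph A HA.
Let SB := continuous4_sph Bf HBf.
Let SbB : continuous4 (fun u v _ _ => b v * sph (Bf u v)).
Proof. continuity4. Qed.

Lemma RInt_sph_A_le : RInt (fun u => RInt (fun v => sph (A u v)) vs vh) u1 u2 <= (u2 - u1) * B1.
Proof.
  rewrite <- (RInt_const (V:=R_CompleteNormedModule)).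
  apply RInt_le_R; [exact hu| apply (ex_RInt_RInt2 (fun u v => sph (A u v))), SA
                   | apply ex_RInt_const|].
  intros u hu'. eapply Rle_trans; [|apply (HU_le u hu')].
  apply RInt_le_R; [exact hv| apply (continuous4_ex_RInt1 _ u 0 0 _ _ SA)
                   | apply (continuous4_ex_RInt1 _ u 0 0 _ _ (continuous4_sph HU HHU))|].
  intros v _. apply sph_le; [exact HA| exact HHU| intros th ph hth _; apply A_le, hth].
Qed.

Lemma RInt_sph_Bf_le :
  RInt (fun u => RInt (fun v => b v * sph (Bf u v)) vs vh) u1 u2 <= RInt b vs vh * B2.
Proof.
  assert (Ib : ex_RInt b vs vh) by exact (continuous4_ex_RInt1 _ 0 0 0 vs vh Hb).
  assert (IbB : ex_RInt (fun v => RInt (fun u => b v * sph (Bf u v)) u1 u2) vs vh).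
  { apply (continuous4_ex_RInt1 (fun _ v _ _ => RInt (fun u => b v * sph (Bf u v)) u1 u2) 0 0 0).
    exact (continuous4_RInt0 (fun u v _ _ => b v * sph (Bf u v)) u1 u2 SbB). }
  rewrite (RInt_swap (fun u v => b v * sph (Bf u v))) by exact SbB.
  rewrite Rmult_comm, <- (RInt_scal_R b B2) by exact Ib.
  apply RInt_le_R; [exact hv| exact IbB| apply ex_RInt_scal_R, Ib|].
  intros v hv'.
  rewrite (RInt_scal_R (fun u => sph (Bf u v)) (b v) u1 u2)
    by exact (continuous4_ex_RInt0 _ v 0 0 u1 u2 SB).
  rewrite (Rmult_comm B2). apply Rmult_le_compat_l; [apply b_ge0, hv'|].
  eapply Rle_trans; [|apply (HV_le v hv')].
  apply RInt_le_R; [exact hu| exact (continuous4_ex_RInt0 _ v 0 0 u1 u2 SB)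
                   | exact (continuous4_ex_RInt0 _ v 0 0 u1 u2 (continuous4_sph HV HHV))|].
  intros u _. apply sph_le; [exact HBf| exact HHV| intros th ph hth _; apply Bf_le, hth].
Qed.

Lemma RInt_sph_bulk_le :
  RInt (fun u => RInt (fun v => sph (fun th ph => c1 * A u v th ph + b v * Bf u v th ph)) vs vh) u1 u2
  <= c1 * ((u2 - u1) * B1) + RInt b vs vh * B2.
Proof.
  assert (IA : ex_RInt (fun u => RInt (fun v => sph (A u v)) vs vh) u1 u2)
    by exact (ex_RInt_RInt2 (fun u v => sph (A u v)) u1 u2 vs vh SA).
  assert (IB : ex_RInt (fun u => RInt (fun v => b v * sph (Bf u v)) vs vh) u1 u2)
    by exact (ex_RInt_RInt2 (fun u v => b v * sph (Bf u v)) u1 u2 vs vh SbB).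
  rewrite (RInt_ext _ (fun u => c1 * RInt (fun v => sph (A u v)) vs vh
                                + RInt (fun v => b v * sph (Bf u v)) vs vh)).
  - rewrite (RInt_plus_R _ _ u1 u2 (ex_RInt_scal_R _ c1 _ _ IA) IB).
    rewrite (RInt_scal_R (fun u => RInt (fun v => sph (A u v)) vs vh)) by exact IA.
    apply Rplus_le_compat; [apply Rmult_le_compat_l; [exact hc1|]|];
      [apply RInt_sph_A_le| apply RInt_sph_Bf_le].
  - intros u _.
    pose proof (continuous4_ex_RInt1 _ u 0 0 vs vh SA) as JA.
    pose proof (continuous4_ex_RInt1 _ u 0 0 vs vh SbB) as JB.
    rewrite <- (RInt_scal_R (fun v => sph (A u v)) c1) by exact JA.
    rewrite <- (RInt_plus_R _ _ vs vh (ex_RInt_scal_R _ c1 _ _ JA) JB).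
    apply RInt_ext. intros v _. exact (sph_linear c1 (b v) A Bf u v HA HBf).
Qed.

End BulkIntegration.

(* v^p, extended continuously by 1 below v = 1, where Rpower is not meaningful. *)
Definition vpow (p v : R) : R := Rpower (Rmax v 1) p.

Lemma vpow_continuous p x : continuity_pt (vpow p) x.
Proof.
  unfold vpow, Rpower.
  apply (continuity_pt_comp (fun v => p * ln (Rmax v 1)) exp);
    [|apply derivable_continuous_pt, derivable_exp].
  apply continuity_pt_mult; [apply continuity_pt_const; intros a b; auto|].
  apply continuity_pt_ball. intros eps he.
  assert (hp : 0 < Rmax x 1) by (pose proof (Rmax_r x 1); lra).
  assert (C : continuity_pt ln (Rmax x 1))
    by (apply derivable_continuous_pt; exists (/ Rmax x 1); apply derivable_pt_lim_ln; auto).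
  destruct (proj1 (continuity_pt_ball _ _) C eps he) as [d [hd D]].
  exists d; split; auto. intros y hy. apply D. eapply Rle_lt_trans; [|exact hy].
  unfold Rmax; repeat destruct Rle_dec; unfold Rabs; repeat destruct Rcase_abs; lra.
Qed.

Lemma continuous4_vpow p : continuous4 (fun _ v _ _ => vpow p v).
Proof. apply (continuous4_comp1 (vpow p) (fun _ v _ _ => v)); [apply vpow_continuous| continuity4]. Qed.

Lemma vpow_Rpower p v : 1 <= v -> vpow p v = Rpower v p.
Proof. intros h. unfold vpow. rewrite Rmax_left by lra. reflexivity. Qed.

Lemma vpow_ge1 p v : 0 <= p -> 1 <= vpow p v.
Proof.
  intros hp. unfold vpow. pose proof (Rmax_r v 1).
  rewrite <- (Rpower_O (Rmax v 1)) at 1 by lra.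
  apply Rle_Rpower; lra.
Qed.

(* From ln x <= x - 1 at x = beta v / p. *)
Lemma vpow_le_exp p beta v : 0 < p -> 0 < beta -> 1 <= v ->
  vpow p v <= exp (p * (ln (p / beta) - 1)) * exp (beta * v).
Proof.
  intros hp hb hv. rewrite vpow_Rpower by lra. unfold Rpower. rewrite <- exp_plus.
  apply exp_le_mono.
  pose proof (exp_ineq1_le (ln (beta * v / p))) as H.
  rewrite exp_ln in H by (apply Rdiv_lt_0_compat; nra).
  unfold Rdiv in *. rewrite ln_mult, ln_mult, ln_Rinv in H by (try apply Rinv_0_lt_compat; nra).
  rewrite ln_mult, ln_Rinv by (try apply Rinv_0_lt_compat; lra).
  assert (E : beta * v * / p * p = beta * v) by (field; lra).
  assert (p * (1 + (ln beta + ln v + - ln p)) <= p * (beta * v * / p)) by (apply Rmult_le_compat_l; lra).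
  nra.
Qed.

(* AM-GM on |d_u phi d_v phi|, using 1 <= v^p. *)
Lemma KW_density_le r Om P c1 b X Y : 0 < r -> 0 < Om -> 1 <= P -> Om / r <= c1 ->
  Om * P / r <= b ->
  Rabs (- (2 / r) * (P + 1) * X * Y) * (r ^ 2 * Om / 2)
  <= c1 * (P * X ^ 2 * r ^ 2) + b * (Y ^ 2 * r ^ 2).
Proof.
  intros hr hO hP h1 h2.
  replace (- (2 / r) * (P + 1) * X * Y) with (- ((2 / r) * (P + 1)) * (X * Y)) by ring.
  rewrite Rabs_mult, Rabs_Ropp, (Rabs_pos_eq ((2 / r) * (P + 1)))
    by (apply Rmult_le_pos; [apply Rlt_le, Rdiv_lt_0_compat|]; lra).
  replace (2 / r * (P + 1) * Rabs (X * Y) * (r ^ 2 * Om / 2))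
    with (r * Om * (P + 1) * Rabs (X * Y)) by (field; lra).
  assert (hXY : 2 * Rabs (X * Y) <= X ^ 2 + Y ^ 2).
  { rewrite Rabs_mult, <- (pow2_abs X), <- (pow2_abs Y).
    pose proof (pow2_ge_0 (Rabs X - Rabs Y)). nra. }
  assert (hc1 : Om <= c1 * r) by (apply (Rmult_le_compat_r r) in h1; [|lra];
    replace (Om / r * r) with Om in h1 by (field; lra); lra).
  assert (hb : Om * P <= b * r) by (apply (Rmult_le_compat_r r) in h2; [|lra];
    replace (Om * P / r * r) with (Om * P) in h2 by (field; lra); lra).
  assert (A0 : 0 <= Rabs (X * Y)) by apply Rabs_pos.
  assert (E1 : r * Om * (P + 1) * Rabs (X * Y) <= r * Om * P * (X ^ 2 + Y ^ 2)).
  { assert (0 <= r * Om) by nra.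
    apply Rle_trans with (r * Om * P * (2 * Rabs (X * Y))); [|apply Rmult_le_compat_l; nra].
    replace (r * Om * P * (2 * Rabs (X * Y))) with (r * Om * (2 * P) * Rabs (X * Y)) by ring.
    apply Rmult_le_compat_r; auto. apply Rmult_le_compat_l; lra. }
  assert (E2 : r * Om * P * X ^ 2 <= c1 * (P * X ^ 2 * r ^ 2)).
  { assert (0 <= P * X ^ 2 * r) by (pose proof (pow2_ge_0 X); apply Rmult_le_pos; nra). nra. }
  assert (E3 : r * Om * P * Y ^ 2 <= b * (Y ^ 2 * r ^ 2)).
  { assert (0 <= Y ^ 2 * r) by (pose proof (pow2_ge_0 Y); nra). nra. }
  nra.
Qed.

Lemma RInt_exp_decay_le C beta a b : 0 < C -> 0 < beta -> a <= b ->
  RInt (fun v => C * exp (- beta * v)) a b <= C / beta * exp (- beta * a).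
Proof.
  intros hC hb hab.
  assert (D : is_RInt (fun v => C * exp (- beta * v)) a b
     (minus (- (C / beta) * exp (- beta * b)) (- (C / beta) * exp (- beta * a)))).
  { apply (is_RInt_derive (V:=R_CompleteNormedModule) (fun v => - (C / beta) * exp (- beta * v))).
    - intros x _. auto_derive; auto. field. lra.
    - intros x _. apply continuity_pt_filterlim, derivable_continuous_pt.
      exists (C * (exp (- beta * x) * (- beta))). apply is_derive_Reals. auto_derive; auto. ring. }
  rewrite (is_RInt_unique _ _ _ _ D). unfold minus, plus, opp; simpl.
  pose proof (exp_pos (- beta * b)). assert (0 < C / beta) by (apply Rdiv_lt_0_compat; lra).
  nra.
Qed.

(** * The energy estimate *)

Section EnergyDensities.

Variables (M e p : R) (Rf : R -> R) (du dv dth dph D0 D1 DTH Q : R -> R -> R -> R -> R).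
Hypotheses (hMe : 0 < Rabs e < M) (hR : RN_rfun M e Rf) (hp : 0 <= p).
Hypotheses (HD0 : continuous4 D0) (HD1 : continuous4 D1) (HDTH : continuous4 DTH)
  (HQ : continuous4 Q).
Hypothesis Deq : forall u v th ph, du u v th ph = D0 u v th ph /\ dv u v th ph = D1 u v th ph /\
  dth u v th ph = DTH u v th ph /\ dph u v th ph = sin th * Q u v th ph.

Let r4 (u v _ _ : R) := rr Rf u v.
Let Om4 (u v _ _ : R) := Om2 M e Rf u v.

(* The u- and v-flux densities and the two parts of the bounding bulk density, all multiplied
   by the density sin(theta) of d sigma. *)
Let HU u v th ph :=
  (vpow p v * D1 u v th ph ^ 2 * r4 u v th ph ^ 2
   + Om4 u v th ph / 4 * (DTH u v th ph ^ 2 + Q u v th ph ^ 2)) * sin th.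
Let HV u v th ph :=
  (D0 u v th ph ^ 2 * r4 u v th ph ^ 2
   + Om4 u v th ph / 4 * vpow p v * (DTH u v th ph ^ 2 + Q u v th ph ^ 2)) * sin th.
Let Av u v th ph := vpow p v * D1 u v th ph ^ 2 * r4 u v th ph ^ 2 * sin th.
Let Bu u v th ph := D0 u v th ph ^ 2 * r4 u v th ph ^ 2 * sin th.

Let r4_pos u v th ph : 0 < r4 u v th ph.
Proof.
  destruct (RN_rfun_facts M e Rf hMe hR) as [P1 _].
  destruct (P1 ((u + v) / 2)); unfold r4, rr; lra.
Qed.

Let Om4_pos u v th ph : 0 < Om4 u v th ph.
Proof. destruct (RN_rfun_facts M e Rf hMe hR) as [_ [P2 _]]. apply P2. Qed.

Let continuous4_r4 : continuous4 r4.
Proof.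
  apply (continuous4_comp1 Rf (fun u v _ _ => (u + v) / 2)); [apply (Rf_continuous M e); auto|].
  unfold Rdiv; continuity4.
Qed.

Let continuous4_Om4 : continuous4 Om4.
Proof.
  apply (continuous4_comp1 (Om2_star M e Rf) (fun u v _ _ => (u + v) / 2));
    [apply (Om2_star_continuous M e); auto|].
  unfold Rdiv; continuity4.
Qed.

Let continuous4_vp := continuous4_vpow p.

Let continuous4_HU : continuous4 HU. Proof. unfold HU, Rdiv; continuity4. Qed.
Let continuous4_HV : continuous4 HV. Proof. unfold HV, Rdiv; continuity4. Qed.
Let continuous4_Av : continuous4 Av. Proof. unfold Av; continuity4. Qed.
Let continuous4_Bu : continuous4 Bu. Proof. unfold Bu; continuity4. Qed.

Let angular_ge0 u v th ph : 0 <= th <= PI ->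
  0 <= Om4 u v th ph / 4 * (DTH u v th ph ^ 2 + Q u v th ph ^ 2) * sin th.
Proof.
  intros hth. pose proof (Om4_pos u v th ph); pose proof (sin_ge_0 th ltac:(lra) ltac:(lra)).
  pose proof (pow2_ge_0 (DTH u v th ph)); pose proof (pow2_ge_0 (Q u v th ph)).
  apply Rmult_le_pos; [apply Rmult_le_pos|]; lra.
Qed.

Let Av_le_HU u v th ph : 0 <= th <= PI -> Av u v th ph <= HU u v th ph.
Proof. intros hth. pose proof (angular_ge0 u v th ph hth). unfold Av, HU. nra. Qed.

Let Bu_le_HV u v th ph : 0 <= th <= PI -> Bu u v th ph <= HV u v th ph.
Proof.
  intros hth. pose proof (angular_ge0 u v th ph hth). pose proof (vpow_ge1 p v hp).
  pose proof (sin_ge_0 th ltac:(lra) ltac:(lra)).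
  pose proof (pow2_ge_0 (DTH u v th ph)); pose proof (pow2_ge_0 (Q u v th ph)).
  assert (0 <= Om4 u v th ph / 4 * (vpow p v - 1) * (DTH u v th ph ^ 2 + Q u v th ph ^ 2) * sin th).
  { pose proof (Om4_pos u v th ph).
    apply Rmult_le_pos; [apply Rmult_le_pos; [apply Rmult_le_pos|]|]; lra. }
  unfold Bu, HV. nra.
Qed.

Let FluxInt_U ub vs vh : 1 <= vs <= vh ->
  FluxInt (fluxU_integrand M e p Rf du dv dth dph ub) vs vh (RInt (fun v => sph (HU ub v)) vs vh).
Proof.
  intros hv. apply (FluxInt_sph _ HU ub); [lra| exact continuous4_HU| |].
  - intros th ph. set (k := / (sin th) ^ 2).
    apply (ex_RInt_ext (V:=R_CompleteNormedModule)
            (fun v => vpow p v * D1 ub v th ph ^ 2 * r4 ub v th ph ^ 2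
            + Om4 ub v th ph / 4 * (DTH ub v th ph ^ 2 + k * (sin th * Q ub v th ph) ^ 2))).
    + intros v hs. rewrite Rmin_left, Rmax_right in hs by lra.
      unfold fluxU_integrand, angGrad2. destruct (Deq ub v th ph) as [_ [-> [-> ->]]].
      rewrite <- (vpow_Rpower p v) by lra. fold k.
      pose proof (r4_pos ub v th ph). unfold r4, Om4 in *. simpl. field. lra.
    + apply (continuous4_ex_RInt1 (fun u v th ph => vpow p v * D1 u v th ph ^ 2 * r4 u v th ph ^ 2
            + Om4 u v th ph / 4 * (DTH u v th ph ^ 2 + k * (sin th * Q u v th ph) ^ 2)) ub th ph).
      unfold Rdiv; continuity4.
  - intros v th ph hs. unfold fluxU_integrand, angGrad2, HU.
    destruct (Deq ub v th ph) as [_ [-> [-> ->]]].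
    rewrite <- (vpow_Rpower p v) by lra. pose proof (r4_pos ub v th ph). unfold r4, Om4 in *.
    destruct (Req_dec (sin th) 0) as [->|hs0]; [ring| field; lra].
Qed.

Let FluxInt_V vb u1 u2 : u1 <= u2 -> 1 <= vb ->
  FluxInt (fluxV_integrand M e p Rf du dv dth dph vb) u1 u2 (RInt (fun u => sph (HV u vb)) u1 u2).
Proof.
  intros hu hv. apply (FluxInt_sph _ (fun v u th ph => HV u v th ph) vb); [lra| |intros th ph|].
  - apply (continuous4_comp HV (fun _ u _ _ => u) (fun v _ _ _ => v) (fun _ _ th _ => th)
             (fun _ _ _ ph => ph)); [exact continuous4_HV| continuity4 ..].
  - set (k := / (sin th) ^ 2).
    apply (ex_RInt_ext (V:=R_CompleteNormedModule) (fun u => D0 u vb th ph ^ 2 * r4 u vb th ph ^ 2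
            + Om4 u vb th ph / 4 * vpow p vb * (DTH u vb th ph ^ 2 + k * (sin th * Q u vb th ph) ^ 2))).
    + intros u _. unfold fluxV_integrand, angGrad2. destruct (Deq u vb th ph) as [-> [_ [-> ->]]].
      rewrite <- (vpow_Rpower p vb) by lra. fold k.
      pose proof (r4_pos u vb th ph). unfold r4, Om4 in *. simpl. field. lra.
    + apply (continuous4_ex_RInt0 (fun u v th ph => D0 u v th ph ^ 2 * r4 u v th ph ^ 2
            + Om4 u v th ph / 4 * vpow p v * (DTH u v th ph ^ 2 + k * (sin th * Q u v th ph) ^ 2))
            vb th ph).
      unfold Rdiv; continuity4.
  - intros u th ph hs. unfold fluxV_integrand, angGrad2, HV.
    destruct (Deq u vb th ph) as [-> [_ [-> ->]]].
    rewrite <- (vpow_Rpower p vb) by lra. pose proof (r4_pos u vb th ph). unfold r4, Om4 in *.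
    destruct (Req_dec (sin th) 0) as [->|hs0]; [ring| field; lra].
Qed.

Let Av_ge0 u v th ph : 0 <= th <= PI -> 0 <= Av u v th ph.
Proof.
  intros hth. pose proof (vpow_ge1 p v hp); pose proof (sin_ge_0 th ltac:(lra) ltac:(lra)).
  pose proof (pow2_ge_0 (D1 u v th ph)); pose proof (pow2_ge_0 (r4 u v th ph)).
  unfold Av. apply Rmult_le_pos; [apply Rmult_le_pos; [apply Rmult_le_pos|]|]; lra.
Qed.

Let Bu_ge0 u v th ph : 0 <= th <= PI -> 0 <= Bu u v th ph.
Proof.
  intros hth. pose proof (sin_ge_0 th ltac:(lra) ltac:(lra)).
  pose proof (pow2_ge_0 (D0 u v th ph)); pose proof (pow2_ge_0 (r4 u v th ph)).
  unfold Bu. apply Rmult_le_pos; [apply Rmult_le_pos|]; lra.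
Qed.

Let RInt_sph_HU_ge0 u vs vh : vs <= vh -> 0 <= RInt (fun v => sph (HU u v)) vs vh.
Proof.
  intros hv. pose proof (continuous4_sph HU continuous4_HU) as S.
  apply RInt_ge0_R; [exact hv| exact (continuous4_ex_RInt1 _ u 0 0 _ _ S)|].
  intros v _. apply sph_ge0; [exact continuous4_HU|].
  intros th ph hth _. pose proof (Av_ge0 u v th ph hth); pose proof (Av_le_HU u v th ph hth); lra.
Qed.

Let RInt_sph_HV_ge0 v u1 u2 : u1 <= u2 -> 0 <= RInt (fun u => sph (HV u v)) u1 u2.
Proof.
  intros hu. pose proof (continuous4_sph HV continuous4_HV) as S.
  apply RInt_ge0_R; [exact hu| exact (continuous4_ex_RInt0 _ v 0 0 _ _ S)|].
  intros u _. apply sph_ge0; [exact continuous4_HV|].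
  intros th ph hth _. pose proof (Bu_ge0 u v th ph hth); pose proof (Bu_le_HV u v th ph hth); lra.
Qed.

Let bulk_density_le c1 b u v th ph : 1 <= v -> 0 <= th <= PI ->
  Om2 M e Rf u v / rr Rf u v <= c1 -> Om2 M e Rf u v * vpow p v / rr Rf u v <= b ->
  bulk_integrand M e p Rf du dv u v th ph * sin th <= c1 * Av u v th ph + b * Bu u v th ph.
Proof.
  intros hv hth h1 h2.
  unfold bulk_integrand, KtildeW. destruct (Deq u v th ph) as [-> [-> _]].
  rewrite <- (vpow_Rpower p v) by lra.
  pose proof (KW_density_le _ _ _ c1 b (D1 u v th ph) (D0 u v th ph)
                (r4_pos u v th ph) (Om4_pos u v th ph) (vpow_ge1 p v hp) h1 h2) as K.
  apply Rmult_le_compat_r with (r := sin th) in K; [|apply sin_ge_0; lra].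
  unfold Av, Bu, r4, Om4 in *. lra.
Qed.

Lemma bulk_estimate c1 C2 beta u1 u2 vs vh eps B1 B2 I :
  0 <= c1 -> 0 < C2 -> 0 < beta -> 1 <= vs <= vh -> u1 <= u2 -> u2 - u1 <= eps ->
  (forall u v, u1 <= u <= u2 -> vs <= v <= vh ->
     Om2 M e Rf u v / rr Rf u v <= c1 /\
     Om2 M e Rf u v * vpow p v / rr Rf u v <= C2 * exp (- beta * v)) ->
  (forall ub, u1 <= ub <= u2 -> forall F,
      FluxInt (fluxU_integrand M e p Rf du dv dth dph ub) vs vh F -> F <= B1) ->
  (forall vb, vs <= vb <= vh -> forall F,
      FluxInt (fluxV_integrand M e p Rf du dv dth dph vb) u1 u2 F -> F <= B2) ->
  RectInt (bulk_integrand M e p Rf du dv) u1 u2 vs vh I ->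
  I <= c1 * eps * B1 + C2 / beta * exp (- beta * vs) * B2.
Proof.
  intros hc1 hC2 hbeta hv hu heps Hw HB1 HB2 HI.
  set (b := fun v => C2 * exp (- beta * v)).
  pose proof continuous4_Av; pose proof continuous4_Bu; pose proof continuous4_HU;
    pose proof continuous4_HV.
  assert (HU_le : forall u, u1 <= u <= u2 -> RInt (fun v => sph (HU u v)) vs vh <= B1)
    by (intros u hu'; apply (HB1 u hu'), FluxInt_U; lra).
  assert (HV_le : forall v, vs <= v <= vh -> RInt (fun u => sph (HV u v)) u1 u2 <= B2)
    by (intros v hv'; apply (HB2 v hv'), FluxInt_V; lra).
  assert (B1_ge0 : 0 <= B1)
    by (pose proof (RInt_sph_HU_ge0 u1 vs vh ltac:(lra)); pose proof (HU_le u1 ltac:(lra)); lra).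
  assert (B2_ge0 : 0 <= B2)
    by (pose proof (RInt_sph_HV_ge0 vs u1 u2 hu); pose proof (HV_le vs ltac:(lra)); lra).
  eapply Rle_trans.
  { apply (RectInt_le_sph (bulk_integrand M e p Rf du dv)
             (fun u v th ph => c1 * Av u v th ph + b v * Bu u v th ph) u1 u2 vs vh I hu ltac:(lra));
      [unfold b; continuity4| |exact HI].
    intros u v th ph hu' hv' hth _. destruct (Hw u v hu' hv').
    apply bulk_density_le; auto; lra. }
  eapply Rle_trans.
  { apply (RInt_sph_bulk_le Av Bu HU HV b c1 u1 u2 vs vh B1 B2); auto; [unfold b; continuity4| lra|].
    intros v _. pose proof (exp_pos (- beta * v)). unfold b. nra. }
  pose proof (RInt_exp_decay_le C2 beta vs vh hC2 hbeta ltac:(lra)).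
  apply Rplus_le_compat; [|apply Rmult_le_compat_r; auto].
  rewrite <- Rmult_assoc. apply Rmult_le_compat_r; [exact B1_ge0|]. apply Rmult_le_compat_l; lra.
Qed.

End EnergyDensities.

(* On gamma, u + v = 2 r^*_blue + alpha log v >= 2 r^*_blue, so the region to the future of
   {u >= u_cut, v >= v_cut} lies in the blue-shift region {r^* >= r^*_blue}. *)
Lemma future_of_gamma_in_blueshift alpha rsb vcut u v : 1 < alpha -> 2 * alpha < vcut ->
  u_gamma alpha rsb vcut <= u -> vcut <= v -> rsb <= (u + v) / 2.
Proof.
  intros ha hv hu hv'. unfold u_gamma in hu.
  assert (0 < ln vcut) by (rewrite <- ln_1; apply ln_increasing; lra).
  assert (0 < alpha * ln vcut) by nra. lra.
Qed.

(* Omega^2 / r is bounded by c1, and Omega^2 v^p / r decays like e^{-beta v}, because the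
   blue-shift decay e^{-2 beta (u + v)} of Omega^2 beats the growth of v^p. *)
Lemma blueshift_weights M e p Rf rblue rsb beta ucut vcut :
  0 < Rabs e < M -> RN_rfun M e Rf -> 0 < p -> 0 < beta -> 1 <= vcut ->
  (forall r, rminus M e < r <= rblue -> - (1 / (2 * r ^ 2) * (M - e ^ 2 / r)) >= beta) ->
  Rf rsb = rblue ->
  (forall u v, ucut <= u -> vcut <= v -> rsb <= (u + v) / 2) ->
  exists c1 C2, 0 < c1 /\ 0 < C2 /\ forall u v, ucut <= u -> vcut <= v ->
    Om2 M e Rf u v / rr Rf u v <= c1 /\
    Om2 M e Rf u v * vpow p v / rr Rf u v <= C2 * exp (- beta * v).
Proof.
  intros hMe hR hp hbeta hvcut hbeta2 hrsb Hreg.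
  destruct (RN_rfun_facts M e Rf hMe hR) as [P1 [P2 _]].
  set (rm := rminus M e). set (W0 := Om2_star M e Rf rsb).
  set (Kp := exp (p * (ln (p / beta) - 1))).
  assert (hrm : 0 < rm) by apply (P1 0).
  assert (hW0 : 0 < W0) by apply P2. assert (hKp : 0 < Kp) by apply exp_pos.
  pose proof (exp_pos (4 * beta * rsb - 2 * beta * ucut)).
  exists (W0 / rm), (W0 * exp (4 * beta * rsb - 2 * beta * ucut) * Kp / rm).
  split; [apply Rdiv_lt_0_compat; auto|].
  split; [apply Rdiv_lt_0_compat; [repeat apply Rmult_lt_0_compat|]; auto|].
  intros u v hu hv. specialize (Hreg u v hu hv).
  pose proof (Om2_star_blueshift_decay M e Rf rblue rsb beta hMe hR hbeta2 hrsb _ Hreg) as Hd.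
  change (Om2 M e Rf u v) with (Om2_star M e Rf ((u + v) / 2)). unfold rr.
  set (s := (u + v) / 2) in *. fold W0 in Hd.
  pose proof (P2 s). destruct (P1 s) as [_ hrs]. fold rm in hrs.
  pose proof (exp_pos (- (4 * beta) * (s - rsb))).
  assert (hr : / Rf s <= / rm) by (apply Rinv_le_contravar; lra).
  assert (E1 : exp (- (4 * beta) * (s - rsb)) <= 1)
    by (rewrite <- exp_0; apply exp_le_mono; nra).
  assert (E2 : vpow p v <= Kp * exp (beta * v)) by (apply vpow_le_exp; lra).
  assert (E3 : exp (- (4 * beta) * (s - rsb)) * exp (beta * v)
               <= exp (4 * beta * rsb - 2 * beta * ucut) * exp (- beta * v))
    by (rewrite <- !exp_plus; apply exp_le_mono; unfold s; nra).
  pose proof (vpow_ge1 p v ltac:(lra)). pose proof (exp_pos (beta * v)).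
  assert (hOm : Om2_star M e Rf s <= W0) by nra.
  assert (0 < / Rf s) by (apply Rinv_0_lt_compat; lra).
  split; unfold Rdiv.
  - apply Rmult_le_compat; lra.
  - apply Rle_trans with (W0 * exp (- (4 * beta) * (s - rsb)) * (Kp * exp (beta * v)) * / rm).
    + apply Rmult_le_compat; try lra; [nra|]. apply Rmult_le_compat; nra.
    + replace (W0 * exp (4 * beta * rsb - 2 * beta * ucut) * Kp * / rm * exp (- beta * v))
        with (W0 * Kp * / rm * (exp (4 * beta * rsb - 2 * beta * ucut) * exp (- beta * v))) by ring.
      replace (W0 * exp (- (4 * beta) * (s - rsb)) * (Kp * exp (beta * v)) * / rm)
        with (W0 * Kp * / rm * (exp (- (4 * beta) * (s - rsb)) * exp (beta * v))) by ring.
      apply Rmult_le_compat_l; [|exact E3].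
      pose proof (Rinv_0_lt_compat rm hrm). apply Rmult_le_pos; nra.
Qed.

Lemma mult_vanishes c : 0 < c -> forall eta, 0 < eta ->
  exists eps0, 0 < eps0 /\ forall eps, 0 < eps < eps0 -> c * eps < eta.
Proof.
  intros hc eta heta. exists (eta / c). split; [apply Rdiv_lt_0_compat; auto|].
  intros eps [h1 h2]. apply (Rmult_lt_compat_l c) in h2; auto.
  replace (c * (eta / c)) with eta in h2 by (field; lra). lra.
Qed.

Lemma exp_decay_vanishes K beta : 0 < K -> 0 < beta -> forall eta, 0 < eta ->
  exists V, forall v, V <= v -> K * exp (- beta * v) < eta.
Proof.
  intros hK hb eta heta. set (q := eta / K).
  assert (hq : 0 < q) by (apply Rdiv_lt_0_compat; auto).
  exists ((1 - ln q) / beta). intros v hv.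
  assert (E : - beta * v < ln q).
  { apply (Rmult_le_compat_l beta) in hv; [|lra].
    replace (beta * ((1 - ln q) / beta)) with (1 - ln q) in hv by (field; lra). lra. }
  apply exp_increasing in E. rewrite exp_ln in E by auto.
  apply (Rmult_lt_compat_l K) in E; auto.
  replace (K * q) with eta in E by (unfold q; field; lra). lra.
Qed.

Theorem mainTheorem11
  (M e p : R) (Rf : R -> R) (rblue rsb beta alpha ucut vcut : R)
  (hMe : 0 < Rabs e < M)
  (hR : RN_rfun M e Rf)
  (hp : 1 < p)
  (hrb : rminus M e < rblue < rplus M e)
  (hrbneg : forall r, rminus M e < r <= rblue -> M - e ^ 2 / r < 0)
  (hrsb : Rf rsb = rblue) (hrsb0 : 0 < rsb)
  (hbeta : 0 < beta)
  (hbeta2 : forall r, rminus M e < r <= rblue -> - (1 / (2 * r ^ 2) * (M - e ^ 2 / r)) >= beta)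
  (ha1 : 1 < alpha) (ha2 : (p + 1) / beta < alpha)
  (ha3 : alpha * (2 - ln (2 * alpha)) > 2 * rsb + 1)
  (hvcut : 2 * alpha < vcut) (hucut : ucut = u_gamma alpha rsb vcut) :
  exists delta1 delta2 : R -> R,
    (forall eps, 0 < eps -> 0 < delta1 eps) /\
    (forall vs, 0 < delta2 vs) /\
    (forall eta, 0 < eta -> exists eps0, 0 < eps0 /\
        forall eps, 0 < eps < eps0 -> delta1 eps < eta) /\
    (forall eta, 0 < eta -> exists V, forall vs, V <= vs -> delta2 vs < eta) /\
    forall (eps : R) (Phi : R -> R -> R -> R -> R -> R) (du dv dth dph : R -> R -> R -> R -> R)
           (vs vh u1 u2 : R),
      0 < eps ->
      smooth5 Phi -> partials Phi du dv dth dph ->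
      vcut <= vs -> vs < vh -> ucut <= u1 -> 0 < u2 - u1 <= eps ->
      forall B1 B2 : R,
        (forall ub, u1 <= ub <= u2 -> forall F,
            FluxInt (fluxU_integrand M e p Rf du dv dth dph ub) vs vh F -> F <= B1) ->
        (forall vb, vs <= vb <= vh -> forall F,
            FluxInt (fluxV_integrand M e p Rf du dv dth dph vb) u1 u2 F -> F <= B2) ->
        forall I, RectInt (bulk_integrand M e p Rf du dv) u1 u2 vs vh I ->
          I <= delta1 eps * B1 + delta2 vs * B2.
Proof.
  (* The remaining hypotheses on r_blue and alpha belong to the construction of gamma in the
     paper; this estimate only uses that gamma lies in the blue-shift region. *)
  subst ucut.
  pose proof (future_of_gamma_in_blueshift alpha rsb vcut) as Hreg.
  destruct (blueshift_weights M e p Rf rblue rsb beta (u_gamma alpha rsb vcut) vcut)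
    as [c1 [C2 [hc1 [hC2 Hw]]]]; auto; try lra.
  exists (fun eps => c1 * eps), (fun vs => C2 / beta * exp (- beta * vs)).
  pose proof (Rdiv_lt_0_compat C2 beta hC2 hbeta) as hK.
  split; [intros; apply Rmult_lt_0_compat; auto|].
  split; [intros; apply Rmult_lt_0_compat; [auto| apply exp_pos]|].
  split; [apply mult_vanishes; auto|]. split; [apply exp_decay_vanishes; auto|].
  intros eps Phi du dv dth dph vs vh u1 u2 heps Hs Hp hvs hvh hu1 hu12 B1 B2 HB1 HB2 I HI.
  destruct (spherical_partials_continuous Phi du dv dth dph Hs Hp)
    as [D0 [D1 [DTH [Q [H0 [H1 [HTH [HQ Deq]]]]]]]].
  apply (bulk_estimate M e p Rf du dv dth dph D0 D1 DTH Q hMe hR ltac:(lra) H0 H1 HTH HQ Deq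
           c1 C2 beta u1 u2 vs vh eps B1 B2 I); auto; try lra.
  intros u v hu hv. apply Hw; lra.
Qed.
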